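(* Suppose assumptions (A1)–(A5) below hold. Then the maximum likelihood estimation problem $$\max_{(x_t,\theta_t,u_t)}\ \sum_{i=0}^{n_x}\log p_\nu(\tilde x_{t_i}-Dx_{t_i})+\sum_{j=0}^{n_u}\log p_\omega(\tilde y_{\tau_j}-Cu_{\tau_j})$$ subject to, for all $t$: $u_t\in\arg\max\{f(x_{t+1},u,\theta_t,\pi_t):x_{t+1}=h(x_t,u),\ u\in\mathcal U\}$, $x_{t+1}=h(x_t,u_t)$, $\theta_{t+1}=g(x_t,u_t,\theta_t,\pi_t)$, $x_t\in\mathcal X$, $\theta_t\in\Theta$ (with the incentives $\pi_t$ given), can be expressed as a mixed integer linear program.
   Context: Model. Let $\mathcal X,\mathcal U,\Pi,\Theta$ be compact finite-dimensional sets with $\mathcal X,\mathcal U,\Theta$ convex. At each discrete time $t$ an agent has system state $x_t\in\mathcal X$, motivational state $\theta_t\in\Theta$, decision $u_t\in\mathcal U$; the coordinator applies known incentive $\pi_t\in\Pi$. Observations: $\tilde x_{t_i}=Dx_{t_i}+\nu_{t_i}$ ($i=0,\dots,n_x$), $\tilde y_{\tau_i}=Cu_{\tau_i}+\omega_{\tau_i}$ ($i=0,\dots,n_u$), with known matrices $C,D$ and noise densities $p_\nu,p_\omega$. $(a;b)$ denotes vertical concatenation. Assumptions: (A1) $\mathcal X,\mathcal U,\Pi,\Theta$ bounded finite-dimensional; $\mathcal X,\mathcal U,\Theta$ convex polyhedra described by finitely many linear inequalities; $\Pi$ described by finitely many mixed integer linear constraints. (A2) $f:\mathcal X\times\mathcal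 U\times\Theta\times\Pi\to\mathbb R$ deterministic, concave in $x$, strictly concave in $u$, concave in $\theta$, with $f(x,u,\theta,\pi)=-(x;u)^TQ(x;u)+(\theta;\pi)^TH(x;u)+\sum_{i=1}^K\min_{j\in J_i}\{F_{i,j}(x;u;\theta;\pi)+\zeta_{i,j}\}$, $Q$ positive semidefinite, $H,F_{i,j}$ matrices, $\zeta_{i,j}$ scalars, $J_i$ finite index sets. (A3) $h,g$ deterministic surjective with $h(x,u)=Ax+Bu+k$ and $g(x,u,\theta,\pi)=G_i(x;u;\theta;\pi)+\chi_i$ whenever $B_i(x;u;\theta;\pi)\le\psi_i$ (finitely many $i$), the polytopes $\{B_i(\cdot)\le\psi_i\}$ having disjoint interiors. (A4) Noise sequences $\{\nu_{t_i}\},\{\omega_{\tau_i}\}$ i.i.d. with i.i.d. components, zero mean and known finite variance; $\log p_\nu,\log p_\omega$ expressible using integer linear constraints. (A5) Observability: there exist $T$ and an incentive sequence such that $(x_0,\theta_0)$ can be computed exactly from noiseless measurements on $0\le t\le T$. *)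

From HB Require Import structures.
From mathcomp Require Import all_boot all_order all_algebra.
From mathcomp Require Import all_classical all_reals all_analysis.

Set Implicit Arguments.
Unset Strict Implicit.
Unset Printing Implicit Defensive.

Import Order.TTheory GRing.Theory Num.Theory.
Local Open Scope ring_scope.

Definition leV (R : numDomainType) (n : nat) (u v : 'cV[R]_n) : Prop :=
  forall i, u i 0 <= v i 0.

Definition polyhedron (R : numDomainType) (n : nat) (S : 'cV[R]_n -> Prop) :=
  exists (m : nat) (A : 'M[R]_(m, n)) (b : 'cV[R]_m),
    forall x, S x <-> leV (A *m x) b.

Definition box_bounded (R : numDomainType) (n : nat) (S : 'cV[R]_n -> Prop) :=
  exists M : R, forall x, S x -> forall i, `|x i 0| <= M.

Definition int_on (R : archiNumDomainType) (n : nat) (I : pred 'I_n)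
  (z : 'cV[R]_n) : Prop := forall i, I i -> z i 0 \is a Num.int.

Definition mixed_integer_set (R : archiNumDomainType) (n : nat)
  (S : 'cV[R]_n -> Prop) :=
  exists (k m : nat) (A : 'M[R]_(m, n + k)) (b : 'cV[R]_m) (I : pred 'I_(n + k)),
    forall x, S x <-> exists w : 'cV[R]_k,
      leV (A *m col_mx x w) b /\ int_on I (col_mx x w).

Definition in_interior (R : numDomainType) (n : nat) (S : 'cV[R]_n -> Prop)
  (z : 'cV[R]_n) : Prop :=
  exists e : R, 0 < e /\
    forall w : 'cV[R]_n, (forall i, `|w i 0 - z i 0| < e) -> S w.

Definition concave_on (R : numDomainType) (n : nat) (D : 'cV[R]_n -> Prop)
  (F : 'cV[R]_n -> R) : Prop :=
  forall x y (l : R), D x -> D y -> 0 <= l -> l <= 1 ->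
    l * F x + (1 - l) * F y <= F (l *: x + (1 - l) *: y).

Definition strictly_concave_on (R : numDomainType) (n : nat)
  (D : 'cV[R]_n -> Prop) (F : 'cV[R]_n -> R) : Prop :=
  forall x y (l : R), D x -> D y -> x != y -> 0 < l -> l < 1 ->
    l * F x + (1 - l) * F y < F (l *: x + (1 - l) *: y).

Definition PSD (R : numDomainType) (n : nat) (Q : 'M[R]_n) : Prop :=
  forall v : 'cV[R]_n, 0 <= (v^T *m Q *m v) 0 0.

Definition minJ (R : realDomainType) (m : nat) (F : 'I_m.+1 -> R) : R :=
  \big[Num.min/F ord0]_(j < m.+1) F j.

Definition cat4 (R : Type) (nx nu nth npi : nat) (x : 'cV[R]_nx) (u : 'cV[R]_nu)
  (th : 'cV[R]_nth) (pi : 'cV[R]_npi) : 'cV[R]_(nx + nu + nth + npi) :=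
  col_mx (col_mx (col_mx x u) th) pi.

Definition f_util (R : realDomainType) (nx nu nth npi : nat)
  (Q : 'M[R]_(nx + nu)) (H : 'M[R]_(nth + npi, nx + nu))
  (K : nat) (m : 'I_K -> nat)
  (F : forall i : 'I_K, 'I_(m i).+1 -> 'rV[R]_(nx + nu + nth + npi))
  (zeta : forall i : 'I_K, 'I_(m i).+1 -> R)
  (x : 'cV[R]_nx) (u : 'cV[R]_nu) (th : 'cV[R]_nth) (pi : 'cV[R]_npi) : R :=
  - ((col_mx x u)^T *m Q *m col_mx x u) 0 0
  + ((col_mx th pi)^T *m H *m col_mx x u) 0 0
  + \sum_(i < K) minJ (fun j => (F i j *m cat4 x u th pi) 0 0 + zeta i j).

Definition noise_density (R : realType) (p : R -> R) : Prop :=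
  measurable_fun setT p /\ (forall x, 0 <= p x) /\
  (\int[lebesgue_measure]_x (p x)%:E = 1)%E /\
  lebesgue_measure.-integrable setT (fun x => (x * p x)%:E) /\
  (\int[lebesgue_measure]_x (x * p x)%:E = 0)%E /\
  (\int[lebesgue_measure]_x (x ^+ 2 * p x)%:E < +oo)%E.

(* density of a vector with i.i.d. components of density p *)
Definition pvec (R : realType) (p : R -> R) (m : nat) (e : 'cV[R]_m) : R :=
  \prod_(k < m) p (e k 0).

(* (A4): log p is expressible using integer linear constraints: its
   hypograph {(e;s) | p e > 0, s <= log p e} is a mixed integer set *)
Definition log_density_milp (R : realType) (p : R -> R) (m : nat) : Prop :=
  mixed_integer_set (fun v : 'cV[R]_(m + 1) =>
    0 < pvec p (usubmx v) /\ dsubmx v 0 0 <= ln (pvec p (usubmx v))).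

(* constraints of the MLE problem on the horizon 0 <= t <= N (states up to N+1) *)
Definition traj_feasible (R : realDomainType) (nx nu nth npi : nat)
  (X : 'cV[R]_nx -> Prop) (U : 'cV[R]_nu -> Prop) (Th : 'cV[R]_nth -> Prop)
  (f : 'cV[R]_nx -> 'cV[R]_nu -> 'cV[R]_nth -> 'cV[R]_npi -> R)
  (h : 'cV[R]_nx -> 'cV[R]_nu -> 'cV[R]_nx)
  (g : 'cV[R]_nx -> 'cV[R]_nu -> 'cV[R]_nth -> 'cV[R]_npi -> 'cV[R]_nth)
  (pi : nat -> 'cV[R]_npi) (N : nat)
  (x : nat -> 'cV[R]_nx) (u : nat -> 'cV[R]_nu) (th : nat -> 'cV[R]_nth) : Prop :=
  (forall t, (t <= N)%N ->
     [/\ U (u t),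
         (forall v, U v ->
            f (h (x t) v) v (th t) (pi t) <= f (h (x t) (u t)) (u t) (th t) (pi t)),
         x t.+1 = h (x t) (u t) &
         th t.+1 = g (x t) (u t) (th t) (pi t)]) /\
  (forall t, (t <= N.+1)%N -> X (x t) /\ Th (th t)).

Definition loglik (R : realType) (nx nu mx my nxo nuo : nat)
  (pnu pom : R -> R) (D : 'M[R]_(mx, nx)) (C : 'M[R]_(my, nu))
  (tx : 'I_nxo.+1 -> nat) (xo : 'I_nxo.+1 -> 'cV[R]_mx)
  (tau : 'I_nuo.+1 -> nat) (yo : 'I_nuo.+1 -> 'cV[R]_my)
  (x : nat -> 'cV[R]_nx) (u : nat -> 'cV[R]_nu) : R :=
  \sum_(i < nxo.+1) ln (pvec pnu (xo i - D *m x (tx i)))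
  + \sum_(j < nuo.+1) ln (pvec pom (yo j - C *m u (tau j))).

(* the likelihood is positive (log-likelihood finite) *)
Definition lik_pos (R : realType) (nx nu mx my nxo nuo : nat)
  (pnu pom : R -> R) (D : 'M[R]_(mx, nx)) (C : 'M[R]_(my, nu))
  (tx : 'I_nxo.+1 -> nat) (xo : 'I_nxo.+1 -> 'cV[R]_mx)
  (tau : 'I_nuo.+1 -> nat) (yo : 'I_nuo.+1 -> 'cV[R]_my)
  (x : nat -> 'cV[R]_nx) (u : nat -> 'cV[R]_nu) : Prop :=
  (forall i, 0 < pvec pnu (xo i - D *m x (tx i))) /\
  (forall j, 0 < pvec pom (yo j - C *m u (tau j))).

(* The problem  max Obj(x,u,th) s.t. Feas(x,u,th) [and Pos(x,u,th), i.e.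
   Obj > -oo] over trajectories on the horizon (states t <= N+1, decisions
   t <= N) can be expressed as a mixed integer linear program
   max c^T z s.t. A z <= b, z_i integer for i in I, whose decision vector z
   determines the trajectory linearly (z contains it, plus auxiliary
   variables): every MILP-feasible z yields a feasible trajectory whose
   objective is >= c^T z, and every feasible trajectory is obtained from
   some MILP-feasible z with c^T z equal to its objective. *)
Definition milp_expressible (R : realType) (nx nu nth : nat) (N : nat)
  (Feas Pos : (nat -> 'cV[R]_nx) -> (nat -> 'cV[R]_nu) -> (nat -> 'cV[R]_nth) -> Prop)
  (Obj : (nat -> 'cV[R]_nx) -> (nat -> 'cV[R]_nu) -> (nat -> 'cV[R]_nth) -> R) : Prop :=
  exists (M Kc : nat) (A : 'M[R]_(Kc, M)) (b : 'cV[R]_Kc) (c : 'cV[R]_M)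
         (I : pred 'I_M) (Sx : nat -> 'M[R]_(nx, M)) (Su : nat -> 'M[R]_(nu, M))
         (Sth : nat -> 'M[R]_(nth, M)),
    (forall z, leV (A *m z) b -> int_on I z ->
       let x := fun t => Sx t *m z in
       let u := fun t => Su t *m z in
       let th := fun t => Sth t *m z in
       [/\ Feas x u th, Pos x u th & (c^T *m z) 0 0 <= Obj x u th]) /\
    (forall x u th, Feas x u th -> Pos x u th ->
       exists z, [/\ leV (A *m z) b, int_on I z,
         (forall t, (t <= N.+1)%N -> Sx t *m z = x t /\ Sth t *m z = th t),
         (forall t, (t <= N)%N -> Su t *m z = u t) &
         (c^T *m z) 0 0 = Obj x u th]).

From HB Require Import structures.
From mathcomp Require Import all_boot all_order all_algebra.
From mathcomp Require Import all_classical all_reals all_analysis.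
From mathcomp Require Import ring lra.
Import Order.TTheory GRing.Theory Num.Theory.
Local Open Scope ring_scope.

Set Implicit Arguments.
Unset Strict Implicit.
Unset Printing Implicit Defensive.

(* Every constraint of the estimation problem describes the projection of a
   mixed-integer polyhedron, and such sets are closed under intersection,
   affine preimage and finite unions of pieces that are bounded in the
   projected coordinates (Balas' disjunctive formulation).  The dynamics h are
   affine, and g is piecewise affine on a bounded domain, so its graph is such
   a union.  For the agent's decision the min-terms of f are replaced by
   epigraph variables: u_t then maximizes a quadratic function, concave in the
   decision because Q is positive semidefinite, over a polyhedron, so u_t is
   optimal iff the KKT conditions hold (necessity by Farkas' lemma), and
   complementary slackness is a choice of active constraints.  The multipliers
   are unbounded, which is harmless since they are not projected.  Finally,
   hypograph variables for the log-densities, representable by (A4), make the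
   log-likelihood linear. *)

Definition join_fun (V W T : Type) (z : V -> T) (w : W -> T) : V + W -> T :=
  fun j => match j with inl v => z v | inr x => w x end.
Arguments join_fun {V W T} z w !j.

Section DotProduct.
Variable R : realFieldType.

Definition vdot (V : finType) (a d : V -> R) := \sum_j a j * d j.

Lemma vdotC (V : finType) (a d : V -> R) : vdot a d = vdot d a.
Proof. by apply: eq_bigr => j _; rewrite mulrC. Qed.

Lemma vdot_combl (V : finType) (x y : R) (a b d : V -> R) :
  vdot (fun j => x * a j + y * b j) d = x * vdot a d + y * vdot b d.
Proof.
rewrite /vdot !mulr_sumr -big_split /=; apply: eq_bigr => j _.
by rewrite mulrDl !mulrA.
Qed.

Lemma vdot_combr (V : finType) (x y : R) (a b d : V -> R) :
  vdot d (fun j => x * a j + y * b j) = x * vdot d a + y * vdot d b.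
Proof. by rewrite vdotC vdot_combl !(vdotC d). Qed.

Lemma eq_vdot (V : finType) (a a' d d' : V -> R) :
  a =1 a' -> d =1 d' -> vdot a d = vdot a' d'.
Proof. by move=> ha hd; apply: eq_bigr => j _; rewrite ha hd. Qed.

Lemma vdotZr (V : finType) (x : R) (a d : V -> R) :
  vdot a (fun j => x * d j) = x * vdot a d.
Proof. by rewrite mulr_sumr; apply: eq_bigr => j _; rewrite mulrCA. Qed.

Lemma vdotDl (V : finType) (a b d : V -> R) :
  vdot (fun j => a j + b j) d = vdot a d + vdot b d.
Proof. by rewrite -big_split; apply: eq_bigr => j _; rewrite mulrDl. Qed.

Lemma vdotDr (V : finType) (a d e : V -> R) :
  vdot a (fun j => d j + e j) = vdot a d + vdot a e.
Proof. by rewrite -big_split; apply: eq_bigr => j _; rewrite mulrDr. Qed.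

Lemma vdotBr (V : finType) (a d e : V -> R) :
  vdot a (fun j => d j - e j) = vdot a d - vdot a e.
Proof. by rewrite -sumrB; apply: eq_bigr => j _; rewrite mulrBr. Qed.

Lemma vdot0l (V : finType) (d : V -> R) : vdot (fun=> 0) d = 0.
Proof. by rewrite /vdot big1 // => j _; rewrite mul0r. Qed.

Lemma vdot0r (V : finType) (a : V -> R) : vdot a (fun=> 0) = 0.
Proof. by rewrite vdotC vdot0l. Qed.

Lemma vdot_suml (K V : finType) (lam : K -> R) (al : K -> V -> R) (d : V -> R) :
  vdot (fun j => \sum_k lam k * al k j) d = \sum_k lam k * vdot (al k) d.
Proof.
rewrite /vdot (eq_bigr (fun j => \sum_k lam k * al k j * d j)) => [|j _];
  last by rewrite mulr_suml.
rewrite exchange_big; apply: eq_bigr => k _; rewrite mulr_sumr.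
by apply: eq_bigr => j _; rewrite mulrA.
Qed.

Lemma vdot_gt0_self (V : finType) (c : V -> R) : (exists j, c j != 0) -> 0 < vdot c c.
Proof.
case=> j cj; rewrite /vdot (bigD1 j) //=.
apply: (@lt_le_trans _ _ (c j * c j)); first by rewrite -expr2 exprn_even_gt0.
by rewrite lerDl sumr_ge0 // => i _; rewrite -expr2 sqr_ge0.
Qed.

End DotProduct.

Section Farkas.
Variable R : realFieldType.

Definition in_cone (K V : finType) (al : K -> V -> R) (s : seq K) (c : V -> R) :=
  exists2 mu : K -> R, (forall k, 0 <= mu k) & c =1 (fun j => \sum_(k <- s) mu k * al k j).

Section ConeStep.
Variables (K V : finType) (al : K -> V -> R) (k : K) (s : seq K) (d : V -> R).
Hypothesis k_notin_s : k \notin s.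
Let p := vdot (al k) d.
Hypothesis p_gt0 : 0 < p.

(* [p] times the projection of [a] onto the hyperplane [d]^perp along [al k]:
   one Fourier-Motzkin elimination step. *)
Definition cone_proj (a : V -> R) j := p * a j - vdot a d * al k j.

Lemma in_cone_cons c : in_cone al s c -> in_cone al (k :: s) c.
Proof.
case=> mu mu0 hc; exists (fun k' => if k' == k then 0 else mu k').
  by move=> k'; case: eqP.
move=> j; rewrite big_cons eqxx mul0r add0r hc; apply: eq_big_seq => k' hk'.
by case: eqP => // ek; move: k_notin_s; rewrite -ek hk'.
Qed.

Lemma in_cone_unproj c :
  {in s, forall k', vdot (al k') d <= 0} -> 0 < vdot c d ->
  in_cone (fun k' => cone_proj (al k')) s (cone_proj c) -> in_cone al (k :: s) c.
Proof.
move=> hs cd [mu mu0 hc].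
pose nu := \sum_(k' <- s) mu k' * vdot (al k') d.
have nu_le0 : nu <= 0 by rewrite /nu big_seq sumr_le0 // => k' /hs; apply: mulr_ge0_le0.
exists (fun k' => if k' == k then (vdot c d - nu) / p else mu k').
  move=> k'; case: eqP => // _; rewrite divr_ge0 ?(ltW p_gt0) //.
  by rewrite subr_ge0 (le_trans nu_le0) ?ltW.
move=> j; rewrite big_cons eqxx.
rewrite (eq_big_seq (fun k' => mu k' * al k' j)); last first.
  by move=> k' hk'; case: eqP => // ek; move: k_notin_s; rewrite -ek hk'.
have hcj : p * c j = \sum_(k' <- s) mu k' * cone_proj (al k') j + vdot c d * al k j.
  by rewrite -hc /cone_proj subrK.
have hsum : \sum_(k' <- s) mu k' * cone_proj (al k') j =
    p * \sum_(k' <- s) mu k' * al k' j - nu * al k j.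
  by rewrite /cone_proj /nu mulr_sumr mulr_suml -sumrB; apply: eq_bigr => k' _; ring.
apply: (mulfI (lt0r_neq0 p_gt0)); rewrite hcj hsum; field; exact: lt0r_neq0.
Qed.

Lemma vdot_cone_proj (a d' : V -> R) :
  p * vdot a (fun j => d' j - vdot (al k) d' / p * d j) = vdot (cone_proj a) d'.
Proof.
have -> : vdot (cone_proj a) d' = p * vdot a d' + (- vdot a d) * vdot (al k) d'.
  by rewrite -vdot_combl; apply: eq_vdot => // j; rewrite /cone_proj mulNr.
rewrite (eq_vdot (a' := a) (d' := fun j => 1 * d' j + (- (vdot (al k) d' / p)) * d j)) //;
  last by move=> j; rewrite mul1r mulNr.
rewrite vdot_combr; field; exact: lt0r_neq0.
Qed.

Lemma vdot_cone_proj_self d' : vdot (cone_proj (al k)) d' = 0.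
Proof. by rewrite /vdot big1 // => j _; rewrite /cone_proj subrr mul0r. Qed.

End ConeStep.

Lemma farkas_seq (K V : finType) (s : seq K) (al : K -> V -> R) (c : V -> R) :
  uniq s -> ~ in_cone al s c ->
  exists d, {in s, forall k, vdot (al k) d <= 0} /\ 0 < vdot c d.
Proof.
elim: s al c => [|k s IH] al c /=.
  move=> _ nc; exists c; split=> //; apply: vdot_gt0_self.
  apply: contra_notP nc => /forallNP c0; exists (fun=> 0) => // j.
  by rewrite big_nil; apply/eqP/negPn/negP; exact: c0.
case/andP=> ks us nc.
have [d [hd cd]] := IH al c us (fun h => nc (in_cone_cons ks h)).
have [ad|ad] := lerP (vdot (al k) d) 0.
  by exists d; split=> // k'; rewrite in_cons => /predU1P [->|/hd].
have [d' [hd' cd']] := IH _ _ us (fun h => nc (in_cone_unproj ks ad hd cd h)).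
exists (fun j => d' j - vdot (al k) d' / vdot (al k) d * d j); split.
  move=> k'; rewrite -(pmulr_rle0 _ ad) vdot_cone_proj //.
  by rewrite in_cons => /predU1P [->|/hd'//]; rewrite vdot_cone_proj_self.
by rewrite -(pmulr_rgt0 _ ad) vdot_cone_proj.
Qed.

Lemma farkas (K V : finType) (al : K -> V -> R) (c : V -> R) :
  (forall d, (forall k, vdot (al k) d <= 0) -> vdot c d <= 0) ->
  exists2 mu : K -> R, (forall k, 0 <= mu k) & forall j, c j = \sum_k mu k * al k j.
Proof.
move=> H; have [[mu mu0 hc]|nc] := pselect (in_cone al (index_enum K) c).
  by exists mu.
have [d [hd cd]] := farkas_seq (index_enum_uniq K) nc.
have := H d (fun k => hd k (mem_index_enum k)).
by rewrite leNgt cd.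
Qed.

End Farkas.

Section LinearProgram.
Variables (R : realFieldType) (Y Rw : finType) (a : Rw -> Y -> R) (b : Rw -> R).

Definition lin_feasible (y : Y -> R) := forall r, vdot (a r) y <= b r.

Definition kkt_multiplier (c y0 : Y -> R) (lam : Rw -> R) :=
  [/\ forall r, 0 <= lam r, forall r, lam r * (b r - vdot (a r) y0) = 0 &
      forall j, c j = \sum_r lam r * a r j].

Lemma vdot_sumI1 (f d : Y + 'I_1 -> R) :
  vdot f d = vdot (f \o inl) (d \o inl) + f (inr ord0) * d (inr ord0).
Proof. by rewrite /vdot big_sumType big_ord1. Qed.

(* Rows of the homogenized system [a r . y <= b r * tau], [0 <= tau]. *)
Definition hom_gen (k : Rw + 'I_1) : Y + 'I_1 -> R :=
  match k with
  | inl r => join_fun (a r) (fun=> - b r)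
  | inr _ => join_fun (fun=> 0) (fun=> -1)
  end.

Lemma lp_homogenized (c y0 : Y -> R) : lin_feasible y0 ->
  (forall y, lin_feasible y -> vdot c y <= vdot c y0) ->
  forall d, (forall k, vdot (hom_gen k) d <= 0) ->
  vdot (join_fun c (fun=> - vdot c y0)) d <= 0.
Proof.
move=> f0 opt d hd; set tau := d (inr ord0); set e := d \o inl.
have tau_ge0 : 0 <= tau.
  by have := hd (inr ord0); rewrite vdot_sumI1 vdot0l add0r mulN1r oppr_le0.
have he : forall r, vdot (a r) e <= b r * tau.
  by move=> r; have := hd (inl r); rewrite vdot_sumI1 /= mulNr subr_le0.
rewrite vdot_sumI1 /= -/tau -/e mulNr subr_le0.
case: (ltrgtP tau 0) => [|tau_gt0|tau0]; first by rewrite ltNge tau_ge0.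
  have fy : lin_feasible (fun j => tau^-1 * e j).
    by move=> r; rewrite vdotZr ler_pdivrMl // mulrC he.
  by have := opt _ fy; rewrite vdotZr ler_pdivrMl // mulrC.
have fy : lin_feasible (fun j => y0 j + e j).
  by move=> r; rewrite vdotDr -[b r]addr0 lerD // -(mulr0 (b r)) -tau0 he.
by have := opt _ fy; rewrite vdotDr tau0 mulr0 gerDl.
Qed.

Lemma lp_multipliers (c y0 : Y -> R) : lin_feasible y0 ->
  (forall y, lin_feasible y -> vdot c y <= vdot c y0) ->
  exists lam, kkt_multiplier c y0 lam.
Proof.
move=> f0 opt; have [mu mu0 hmu] := farkas (lp_homogenized f0 opt).
have stat j : c j = \sum_r mu (inl r) * a r j.
  by have := hmu (inl j); rewrite big_sumType big_ord1 /= mulr0 addr0.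
have slack : \sum_r mu (inl r) * (b r - vdot (a r) y0) + mu (inr ord0) = 0.
  have := hmu (inr ord0); rewrite big_sumType big_ord1 /= mulrN1.
  rewrite (eq_vdot (a' := fun j => \sum_r mu (inl r) * a r j) (d' := y0)) //.
  rewrite vdot_suml => hy0.
  have hb : \sum_r mu (inl r) * - b r = - \sum_r mu (inl r) * b r.
    by rewrite -sumrN; apply: eq_bigr => r _; rewrite mulrN.
  rewrite hb in hy0; under eq_bigr do rewrite mulrBr.
  rewrite sumrB; lra.
have term_ge0 r : 0 <= mu (inl r) * (b r - vdot (a r) y0) by rewrite mulr_ge0 ?subr_ge0.
have sum0 : \sum_r mu (inl r) * (b r - vdot (a r) y0) = 0.
  apply/eqP; rewrite eq_le [X in _ && X]sumr_ge0 ?andbT => [|r _]; last exact: term_ge0.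
  by have := mu0 (inr ord0); lra.
exists (fun r => mu (inl r)); split=> // r.
exact: (psumr_eq0P (fun r _ => term_ge0 r) sum0 (i := r) isT).
Qed.

End LinearProgram.

Section KKT.
Variables (R : realFieldType) (Y Rw : finType) (a : Rw -> Y -> R) (b : Rw -> R).
Variables (Phi : (Y -> R) -> R) (G : (Y -> R) -> Y -> R) (F2 : (Y -> R) -> R).
Hypothesis Phi_expand : forall y d t,
  Phi (fun j => y j + t * d j) = Phi y + t * vdot (G y) d + t ^+ 2 * F2 d.
Hypothesis F2_le0 : forall d, F2 d <= 0.

Lemma Phi_expand1 y0 y :
  Phi y = Phi y0 + vdot (G y0) (fun j => y j - y0 j) + F2 (fun j => y j - y0 j).
Proof.
rewrite -[vdot _ _]mul1r -[F2 _]mul1r -{2}(expr1n _ 2) -Phi_expand.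
by congr Phi; apply: funext => j; rewrite mul1r addrC subrK.
Qed.

Lemma kkt_sufficient y0 lam : kkt_multiplier a b (G y0) y0 lam ->
  forall y, lin_feasible a b y -> Phi y <= Phi y0.
Proof.
case=> lam0 compl stat y fy.
have hlin : vdot (G y0) (fun j => y j - y0 j) <= 0.
  rewrite vdotBr !(eq_vdot (a' := fun j => \sum_r lam r * a r j) _ (frefl _)) //.
  rewrite !vdot_suml -sumrB sumr_le0 // => r _.
  by have := compl r; have := lam0 r; have := fy r; nra.
by rewrite (Phi_expand1 y0 y); have := F2_le0 (fun j => y j - y0 j); lra.
Qed.

Lemma first_order_optimality y0 : lin_feasible a b y0 ->
  (forall y, lin_feasible a b y -> Phi y <= Phi y0) ->
  forall y, lin_feasible a b y -> vdot (G y0) y <= vdot (G y0) y0.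
Proof.
move=> f0 opt y fy; rewrite -subr_le0 -vdotBr; set d := fun j => y j - y0 j.
have step t : 0 < t <= 1 -> vdot (G y0) d <= t * - F2 d.
  case/andP=> t0 t1.
  have ft : lin_feasible a b (fun j => y0 j + t * d j).
    move=> r; rewrite vdotDr vdotZr vdotBr.
    by have := f0 r; have := fy r; nra.
  by have := opt _ ft; rewrite Phi_expand expr2 => h; nra.
have := F2_le0 d; rewrite -oppr_ge0.
set g := vdot (G y0) d in step *; set C := - F2 d in step * => C_ge0.
rewrite leNgt; apply/negP => g_gt0.
have den : 0 < g + C by rewrite ltr_wpDr.
have := step (g / (g + C)); rewrite divr_gt0 // ler_pdivrMr // mul1r lerDl C_ge0.
by move/(_ isT); rewrite mulrAC ler_pdivlMr // => h; nra.
Qed.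

Theorem kkt_optimal y0 : lin_feasible a b y0 ->
  (forall y, lin_feasible a b y -> Phi y <= Phi y0) <->
  exists lam, kkt_multiplier a b (G y0) y0 lam.
Proof.
move=> f0; split=> [opt|[lam hlam]]; last exact: kkt_sufficient hlam.
exact: lp_multipliers f0 (first_order_optimality f0 opt).
Qed.

End KKT.

Section AffineQuadratic.
Variables (R : realFieldType) (Z : finType).
Implicit Types (F G : (Z -> R) -> R) (x d : Z -> R).

Definition affine_fun F := exists (c : Z -> R) (c0 : R), forall x, F x = vdot c x + c0.

Definition quadratic_fun F := exists (M : Z -> Z -> R) (l : Z -> R) (c0 : R),
  forall x, F x = \sum_j \sum_k M j k * x j * x k + vdot l x + c0.

Lemma affine_ext F G : F =1 G -> affine_fun F -> affine_fun G.
Proof. by move=> e [c [c0 h]]; exists c, c0 => x; rewrite -e. Qed.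

Lemma affine_cst (k : R) : affine_fun (fun=> k).
Proof. by exists (fun=> 0), k => x; rewrite vdot0l add0r. Qed.

Lemma vdot_delta (j : Z) x : vdot (fun i => (i == j)%:R) x = x j.
Proof.
rewrite /vdot (bigD1 j) //= eqxx mul1r big1 ?addr0 // => i /negbTE ->.
by rewrite mul0r.
Qed.

Lemma affine_var (j : Z) : affine_fun (fun x => x j).
Proof. by exists (fun i => (i == j)%:R), 0 => x; rewrite addr0 vdot_delta. Qed.

Lemma affineD F G : affine_fun F -> affine_fun G -> affine_fun (fun x => F x + G x).
Proof.
move=> [c [c0 hF]] [e [e0 hG]]; exists (fun j => c j + e j), (c0 + e0) => x.
by rewrite hF hG vdotDl addrACA.
Qed.

Lemma affineZ (k : R) F : affine_fun F -> affine_fun (fun x => k * F x).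
Proof.
move=> [c [c0 hF]]; exists (fun j => k * c j), (k * c0) => x.
by rewrite hF mulrDr /vdot mulr_sumr; congr (_ + _); apply: eq_bigr => j _; rewrite mulrA.
Qed.

Lemma affineN F : affine_fun F -> affine_fun (fun x => - F x).
Proof. by move/(affineZ (-1)); apply: affine_ext => x; rewrite mulN1r. Qed.

Lemma affineB F G : affine_fun F -> affine_fun G -> affine_fun (fun x => F x - G x).
Proof. by move=> hF /affineN; apply: affineD. Qed.

Lemma affineMr (k : R) F : affine_fun F -> affine_fun (fun x => F x * k).
Proof. by move/(affineZ k); apply: affine_ext => x; rewrite mulrC. Qed.

Lemma affine_sum (I : finType) (P : pred I) (F : I -> (Z -> R) -> R) :
  (forall i, affine_fun (F i)) -> affine_fun (fun x => \sum_(i | P i) F i x).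
Proof.
move=> /choice [c /choice [c0 hc]].
exists (fun j => \sum_(i | P i) c i j), (\sum_(i | P i) c0 i) => x.
rewrite (eq_bigr (fun i => vdot (c i) x + c0 i)) => [|i _]; last exact: hc.
rewrite big_split /=; congr (_ + _); rewrite /vdot exchange_big /=.
by apply: eq_bigr => j _; rewrite mulr_suml.
Qed.

Lemma affine_vdot (V : finType) (a : V -> R) (f : V -> Z) :
  affine_fun (fun x => vdot a (fun j => x (f j))).
Proof. by rewrite /vdot; apply: affine_sum => j; apply: affineZ; apply: affine_var. Qed.

Lemma quadratic_ext F G : F =1 G -> quadratic_fun F -> quadratic_fun G.
Proof. by move=> e [M [l [c0 h]]]; exists M, l, c0 => x; rewrite -e. Qed.

Lemma affine_quadratic F : affine_fun F -> quadratic_fun F.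
Proof.
move=> [c [c0 h]]; exists (fun _ _ => 0), c, c0 => x.
by rewrite big1 ?add0r // => j _; rewrite big1 // => k _; rewrite !mul0r.
Qed.

Lemma quadraticD F G :
  quadratic_fun F -> quadratic_fun G -> quadratic_fun (fun x => F x + G x).
Proof.
move=> [M [l [c0 hF]]] [N [m [d0 hG]]].
exists (fun j k => M j k + N j k), (fun j => l j + m j), (c0 + d0) => x.
rewrite hF hG vdotDl.
have -> : \sum_j \sum_k (M j k + N j k) * x j * x k =
    \sum_j \sum_k M j k * x j * x k + \sum_j \sum_k N j k * x j * x k.
  rewrite -big_split; apply: eq_bigr => j _; rewrite -big_split.
  by apply: eq_bigr => k _; rewrite /= !mulrDl.
ring.
Qed.

Lemma quadraticZ (k : R) F : quadratic_fun F -> quadratic_fun (fun x => k * F x).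
Proof.
move=> [M [l [c0 hF]]]; exists (fun j i => k * M j i), (fun j => k * l j), (k * c0).
move=> x; rewrite hF /vdot !mulrDr !mulr_sumr; congr (_ + _ + _).
  by apply: eq_bigr => j _; rewrite mulr_sumr; apply: eq_bigr => i _; rewrite !mulrA.
by apply: eq_bigr => j _; rewrite mulrA.
Qed.

Lemma quadratic_sum (I : finType) (F : I -> (Z -> R) -> R) :
  (forall i, quadratic_fun (F i)) -> quadratic_fun (fun x => \sum_i F i x).
Proof.
move=> h; suff: forall s : seq I, quadratic_fun (fun x => \sum_(i <- s) F i x) by apply.
elim=> [|i s IH].
  by apply: quadratic_ext (affine_quadratic (affine_cst 0)) => x; rewrite big_nil.
by apply: quadratic_ext (quadraticD (h i) IH) => x; rewrite big_cons.
Qed.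

Lemma quadraticM F G : affine_fun F -> affine_fun G -> quadratic_fun (fun x => F x * G x).
Proof.
move=> [c [c0 hF]] [e [e0 hG]].
exists (fun j k => c j * e k), (fun j => c0 * e j + e0 * c j), (c0 * e0) => x.
rewrite hF hG vdot_combl.
have -> : \sum_j \sum_k c j * e k * x j * x k = vdot c x * vdot e x.
  rewrite /vdot mulr_suml; apply: eq_bigr => j _; rewrite mulr_sumr.
  by apply: eq_bigr => k _ /=; ring.
ring.
Qed.

Lemma quadratic_expand F : quadratic_fun F ->
  exists (G : (Z -> R) -> Z -> R) (F2 : (Z -> R) -> R),
    (forall j, affine_fun (fun x => G x j)) /\
    forall x d t, F (fun j => x j + t * d j) = F x + t * vdot (G x) d + t ^+ 2 * F2 d.
Proof.
move=> [M [l [c0 hF]]].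
exists (fun x j => \sum_k (M k j + M j k) * x k + l j).
exists (fun d => \sum_j \sum_k M j k * d j * d k); split.
  move=> j; apply: affineD _ (affine_cst _).
  by apply: affine_sum => k; apply: affineZ; apply: affine_var.
move=> x d t; rewrite !hF.
rewrite (eq_vdot (a' := l) (d' := fun j => 1 * x j + t * d j)) // => [|j]; last by rewrite mul1r.
rewrite vdot_combr mul1r.
have -> : \sum_j \sum_k M j k * (x j + t * d j) * (x k + t * d k) =
    \sum_j \sum_k M j k * x j * x k +
    t * (\sum_j \sum_k (M j k * x j * d k + M j k * d j * x k)) +
    t ^+ 2 * \sum_j \sum_k M j k * d j * d k.
  rewrite !mulr_sumr -!big_split; apply: eq_bigr => j _.
  by rewrite !mulr_sumr -!big_split; apply: eq_bigr => k _ /=; ring.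
have -> : vdot (fun j => \sum_k (M k j + M j k) * x k + l j) d =
    \sum_j \sum_k (M j k * x j * d k + M j k * d j * x k) + vdot l d.
  rewrite vdotDl; congr (_ + _).
  rewrite /vdot (eq_bigr (fun j => \sum_k (M k j * x k * d j + M j k * d j * x k)));
    last by move=> j _; rewrite mulr_suml; apply: eq_bigr => k _; ring.
  under eq_bigr do rewrite big_split; under [RHS]eq_bigr do rewrite big_split.
  by rewrite !big_split /= exchange_big.
ring.
Qed.

End AffineQuadratic.
Arguments affine_cst {R Z}.
Arguments affine_var {R Z}.

Section AffineComp.
Variable R : realFieldType.

Lemma affine_comp (Z Z' : finType) (F : (Z' -> R) -> R) (G : Z' -> (Z -> R) -> R) :
  affine_fun F -> (forall v, affine_fun (G v)) -> affine_fun (fun x => F (fun v => G v x)).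
Proof.
move=> [c [c0 hF]] hG.
apply: affine_ext (affineD (affine_sum predT (fun v => affineZ (c v) (hG v))) (affine_cst c0)).
by move=> x; rewrite hF.
Qed.

End AffineComp.

Lemma col_eta (T : Type) n (v : 'cV[T]_n) : \col_i v i 0 = v.
Proof. by apply/matrixP => i j; rewrite mxE (ord1 j). Qed.

Section AffineVec.
Variables (R : realFieldType) (Z : finType).

Definition affine_vec n (X : (Z -> R) -> 'cV[R]_n) := forall i, affine_fun (fun x => X x i 0).

Lemma affine_vec_col n (s : 'I_n -> Z) : affine_vec (fun x => \col_i x (s i)).
Proof. by move=> i; apply: affine_ext (affine_var (s i)) => x; rewrite mxE. Qed.

Lemma affine_vec_cst n (c : 'cV[R]_n) : affine_vec (fun=> c).
Proof. by move=> i; apply: affine_cst. Qed.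

Lemma affine_vecD n (X Y : (Z -> R) -> 'cV[R]_n) :
  affine_vec X -> affine_vec Y -> affine_vec (fun x => X x + Y x).
Proof. by move=> hX hY i; apply: affine_ext (affineD (hX i) (hY i)) => x; rewrite mxE. Qed.

Lemma affine_vecB n (X Y : (Z -> R) -> 'cV[R]_n) :
  affine_vec X -> affine_vec Y -> affine_vec (fun x => X x - Y x).
Proof. by move=> hX hY i; apply: affine_ext (affineB (hX i) (hY i)) => x; rewrite !mxE. Qed.

Lemma affine_vecM r n (M : 'M[R]_(r, n)) (X : (Z -> R) -> 'cV[R]_n) :
  affine_vec X -> affine_vec (fun x => M *m X x).
Proof.
move=> hX i; apply: affine_ext (affine_sum predT (fun j => affineZ (M i j) (hX j))) => x.
by rewrite mxE.
Qed.

Lemma affine_vec_col_mx n1 n2 (X : (Z -> R) -> 'cV[R]_n1) (Y : (Z -> R) -> 'cV[R]_n2) :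
  affine_vec X -> affine_vec Y -> affine_vec (fun x => col_mx (X x) (Y x)).
Proof.
move=> hX hY i; rewrite -(splitK i); case: (fintype.split i) => j /=.
  by apply: affine_ext (hX j) => x; rewrite col_mxEu.
by apply: affine_ext (hY j) => x; rewrite col_mxEd.
Qed.

Definition bform m n (u : 'cV[R]_m) (M : 'M[R]_(m, n)) (v : 'cV[R]_n) := (u^T *m M *m v) 0 0.

Lemma bform_sum m n (u : 'cV[R]_m) (M : 'M[R]_(m, n)) (v : 'cV[R]_n) :
  bform u M v = \sum_i \sum_j u i 0 * M i j * v j 0.
Proof.
rewrite /bform mxE exchange_big; apply: eq_bigr => j _.
by rewrite mxE mulr_suml; apply: eq_bigr => i _; rewrite !mxE.
Qed.

Lemma quadratic_bform m n (U : (Z -> R) -> 'cV[R]_m) (M : 'M[R]_(m, n))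
    (V : (Z -> R) -> 'cV[R]_n) :
  affine_vec U -> affine_vec V -> quadratic_fun (fun x => bform (U x) M (V x)).
Proof.
move=> hU hV; apply: quadratic_ext (fun x => esym (bform_sum (U x) M (V x))) _.
apply: quadratic_sum => i; apply: quadratic_sum => j.
by apply: quadraticM (hV j); apply: affineMr.
Qed.

Lemma bformDl m n (u e : 'cV[R]_m) (M : 'M[R]_(m, n)) v :
  bform (u + e) M v = bform u M v + bform e M v.
Proof. by rewrite /bform linearD /= !mulmxDl mxE. Qed.

Lemma bformDr m n (u : 'cV[R]_m) (M : 'M[R]_(m, n)) v e :
  bform u M (v + e) = bform u M v + bform u M e.
Proof. by rewrite /bform mulmxDr mxE. Qed.

Lemma bformNl m n (u : 'cV[R]_m) (M : 'M[R]_(m, n)) v : bform (- u) M v = - bform u M v.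
Proof. by rewrite /bform linearN /= !mulNmx mxE. Qed.

Lemma bformNr m n (u : 'cV[R]_m) (M : 'M[R]_(m, n)) v : bform u M (- v) = - bform u M v.
Proof. by rewrite /bform mulmxN mxE. Qed.

Lemma bform_parallelogram n (Q : 'M[R]_n) (w e : 'cV[R]_n) :
  bform (w + e) Q (w + e) + bform (w - e) Q (w - e) = 2 * bform w Q w + 2 * bform e Q e.
Proof. by rewrite !(bformDl, bformDr, bformNl, bformNr); ring. Qed.

End AffineVec.
Arguments affine_vec_col {R Z n} s.

Section Representable.
Variable R : archiRealFieldType.

Definition mi_representable (V : finType) (S : (V -> R) -> Prop) :=
  exists (Z Rw : finType) (emb : V -> Z) (L : Rw -> (Z -> R) -> R) (I : pred Z),
    (forall r, affine_fun (L r)) /\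
    forall z, S z <-> exists x : Z -> R,
      [/\ forall v, x (emb v) = z v, forall r, L r x <= 0 &
          forall j, I j -> x j \is a Num.int].

Definition eq_rows (u v : R) (b : bool) := if b then u - v else v - u.

Lemma eq_rowsP u v : (forall b, eq_rows u v b <= 0) <-> u = v.
Proof.
split=> [h|-> b]; last by case: b; rewrite /eq_rows subrr.
have := h true; have := h false; rewrite /eq_rows !subr_le0 => h1 h2.
by apply/eqP; rewrite eq_le h1 h2.
Qed.

Lemma affine_eq_rows (Z : finType) (F G : (Z -> R) -> R) b :
  affine_fun F -> affine_fun G -> affine_fun (fun x => eq_rows (F x) (G x) b).
Proof. by case: b => hF hG; apply: affineB. Qed.

Lemma mi_representable_ext (V : finType) (S S' : (V -> R) -> Prop) :
  mi_representable S -> (forall z, S z <-> S' z) -> mi_representable S'.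
Proof.
move=> [Z [Rw [emb [L [I [hL hS]]]]]] e.
by exists Z, Rw, emb, L, I; split=> // z; rewrite -e.
Qed.

Lemma mi_representable_polyhedron (V Rw : finType) (L : Rw -> (V -> R) -> R) :
  (forall r, affine_fun (L r)) -> mi_representable (fun z => forall r, L r z <= 0).
Proof.
move=> hL; exists V, Rw, id, L, pred0; split=> // z; split=> [h|[x [ex hx _]]].
  by exists z.
by have -> : z = x by apply: funext => v; rewrite -ex.
Qed.

Lemma mi_representable_prod (V1 V2 : finType) (S1 : (V1 -> R) -> Prop) (S2 : (V2 -> R) -> Prop) :
  mi_representable S1 -> mi_representable S2 ->
  mi_representable (fun y => S1 (fun v => y (inl v)) /\ S2 (fun v => y (inr v))).
Proof.
move=> [Z1 [Rw1 [e1 [L1 [I1 [hL1 h1]]]]]] [Z2 [Rw2 [e2 [L2 [I2 [hL2 h2]]]]]].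
exists (Z1 + Z2)%type, (Rw1 + Rw2)%type.
exists (fun v => match v with inl v1 => inl (e1 v1) | inr v2 => inr (e2 v2) end).
exists (fun r x => match r with
                  | inl r1 => L1 r1 (fun j => x (inl j))
                  | inr r2 => L2 r2 (fun j => x (inr j)) end).
exists (fun j => match j with inl j1 => I1 j1 | inr j2 => I2 j2 end); split.
  by case=> r; apply: affine_comp => // j; apply: affine_var.
move=> y; rewrite h1 h2; split.
  case=> -[x1 [ex1 r1 i1]] [x2 [ex2 r2 i2]]; exists (join_fun x1 x2).
  split=> [[v|v]|[r|r]|[j|j]] /=;
    [apply: ex1 | apply: ex2 | apply: r1 | apply: r2 | apply: i1 | apply: i2].
case=> x [ex rx ix]; split.
  exists (fun j => x (inl j)); split=> [v|r|j].
  - exact: ex (inl v).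
  - exact: rx (inl r).
  - exact: ix (inl j).
exists (fun j => x (inr j)); split=> [v|r|j].
- exact: ex (inr v).
- exact: rx (inr r).
- exact: ix (inr j).
Qed.

Lemma mi_representable_comp (V V' : finType) (S : (V' -> R) -> Prop)
    (L : V' -> (V -> R) -> R) :
  mi_representable S -> (forall v', affine_fun (L v')) ->
  mi_representable (fun z => S (fun v' => L v' z)).
Proof.
move=> [Z [Rw [e [L' [I [hL' h]]]]]] hL.
exists (V + Z)%type, (Rw + V' * bool)%type, inl.
exists (fun r x => match r with
  | inl r1 => L' r1 (fun j => x (inr j))
  | inr (v', b) => eq_rows (x (inr (e v'))) (L v' (fun j => x (inl j))) b end).
exists (fun j => if j is inr j' then I j' else false); split.
  case=> [r|[v' b]]; first by apply: affine_comp => // j; apply: affine_var.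
  apply: affine_eq_rows; first exact: affine_var.
  by apply: affine_comp => // j; apply: affine_var.
move=> z; rewrite h; split.
  case=> x [ex rx ix]; exists (join_fun z x); split=> //.
    case=> [r|[v' b]]; first exact: rx.
    by move: b; apply/eq_rowsP; rewrite /= ex.
  by case.
case=> x [ex rx ix]; exists (fun j => x (inr j)); split=> [v'|r|j].
- have /eq_rowsP -> := fun b => rx (inr (v', b)).
  by congr L; apply: funext => v; apply: ex.
- exact: rx (inl r).
- exact: ix (inr j).
Qed.

Lemma mi_representableI (V : finType) (S1 S2 : (V -> R) -> Prop) :
  mi_representable S1 -> mi_representable S2 ->
  mi_representable (fun z => S1 z /\ S2 z).
Proof.
move=> h1 h2; apply: mi_representable_ext.
  apply: (mi_representable_comp (mi_representable_prod h1 h2) (L := fun v z => join_fun z z v)).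
  by case=> v; apply: affine_var.
by [].
Qed.

Lemma mi_representableI3 (V : finType) (S1 S2 S3 : (V -> R) -> Prop) :
  mi_representable S1 -> mi_representable S2 -> mi_representable S3 ->
  mi_representable (fun z => [/\ S1 z, S2 z & S3 z]).
Proof.
move=> h1 h2 h3; apply: (mi_representable_ext (mi_representableI h1 (mi_representableI h2 h3))).
by move=> z; split=> [[? []]|[]].
Qed.

Lemma mi_representable_forall (V K : finType) (S : K -> (V -> R) -> Prop) :
  (forall k, mi_representable (S k)) -> mi_representable (fun z => forall k, S k z).
Proof.
move=> h; suff: forall s : seq K, mi_representable (fun z => forall k, k \in s -> S k z).
  move=> /(_ (index_enum K)) hK; apply: (mi_representable_ext hK) => z.
  by split=> H k //; apply: H; rewrite mem_index_enum.
elim=> [|k s IH].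
  have := mi_representable_polyhedron (L := fun (r : void) (_ : V -> R) => 0)
    (fun r => match r with end).
  by move=> h0; apply: (mi_representable_ext h0) => z; split=> // _ [].
have hI := mi_representableI (h k) IH.
apply: (mi_representable_ext hI) => z.
split=> [[hk hs] k'|H]; first by rewrite in_cons => /predU1P [->|/hs].
by split=> [|k' hk']; apply: H; rewrite in_cons ?eqxx ?hk' ?orbT.
Qed.

End Representable.

Lemma join_fun_split (V W T : Type) (y : V + W -> T) :
  join_fun (fun v => y (inl v)) (fun u => y (inr u)) = y.
Proof. by apply: funext => -[]. Qed.

Lemma ray_bounded (R : realFieldType) (a d M : R) :
  (forall t, 0 <= t -> `|a + t * d| <= M) -> d = 0.
Proof.
move=> h; apply: contraTeq isT => d0.
have dp : 0 < `|d| by rewrite normr_gt0.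
have M0 : 0 <= M := le_trans (normr_ge0 _) (h 0 (lexx _)).
pose t := (M + `|a| + 1) / `|d|.
have t0 : 0 <= t by rewrite divr_ge0 // !addr_ge0.
have e : `|t * d| = M + `|a| + 1.
  by rewrite normrM ger0_norm // /t mulrAC -mulrA mulfV ?mulr1 // gt_eqF.
have := lerB_dist (t * d) (- a); rewrite opprK normrN addrC e => h1.
by have := h t t0; rewrite addrC => h2; have := le_trans h1 h2; lra.
Qed.

Lemma int_sum1_unit (R : archiNumDomainType) (K : finType) (be : K -> R) :
  (forall k, 0 <= be k) -> (forall k, be k \is a Num.int) -> \sum_k be k = 1 ->
  exists k0, be k0 = 1 /\ forall k, k != k0 -> be k = 0.
Proof.
move=> be0 bei be1.
have /existsP [k0 nz] : [exists k, be k != 0].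
  apply: contraLR (oner_neq0 R) => /existsPn h; rewrite negbK -be1 big1 // => k _.
  by apply/eqP/negPn; apply: h.
have ge1 : 1 <= be k0 by rewrite -(ger0_norm (be0 k0)) norm_intr_ge1.
move: be1; rewrite (bigD1 k0) //= => be1.
have rest0 : \sum_(k | k != k0) be k = 0.
  apply/eqP; rewrite eq_le sumr_ge0 ?andbT // -(lerD2l (be k0)) be1.
  by rewrite addr0.
exists k0; split.
  by move: be1; rewrite rest0 addr0.
by move=> k nk; apply: (psumr_eq0P (fun i _ => be0 i) rest0 nk).
Qed.

Section BoundedUnion.
Variables (R : archiRealFieldType) (V W K Rw : finType).
Variables (c : K -> Rw -> V + W -> R) (c0 : K -> Rw -> R) (M : R).

Definition piece_sys k y := forall r, vdot (c k r) y + c0 k r <= 0.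

Hypothesis piece_bounded : forall k y, piece_sys k y -> forall v, `|y (inl v)| <= M.
Hypothesis piece_nonempty : forall k, exists y, piece_sys k y.

Lemma recession_inl k d : (forall r, vdot (c k r) d <= 0) -> forall v, d (inl v) = 0.
Proof.
move=> hd v; have [y hy] := piece_nonempty k.
apply: (@ray_bounded _ (y (inl v)) _ M) => t t0.
have : piece_sys k (fun j => y j + t * d j).
  by move=> r; rewrite vdotDr vdotZr; have := hy r; have := hd r; nra.
by move/piece_bounded/(_ v).
Qed.

(* Balas' extended formulation of the union of the pieces: one copy of the
   variables and one binary selector per piece. *)
Definition hull_var : finType := (V + (K * (V + W) + K))%type.
Definition hull_copy (x : hull_var -> R) k j := x (inr (inl (k, j))).
Definition hull_sel (x : hull_var -> R) k := x (inr (inr k)).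
Definition hull_int (j : hull_var) := if j is inr (inr _) then true else false.

Definition hull_row (rr : (K * Rw + K) + (bool + V * bool)) (x : hull_var -> R) :=
  match rr with
  | inl (inl (k, r)) => vdot (c k r) (hull_copy x k) + c0 k r * hull_sel x k
  | inl (inr k) => - hull_sel x k
  | inr (inl b) => eq_rows (\sum_k hull_sel x k) 1 b
  | inr (inr (v, b)) => eq_rows (x (inl v)) (\sum_k hull_copy x k (inl v)) b
  end.

Lemma affine_hull_row rr : affine_fun (hull_row rr).
Proof.
have hv j : affine_fun (fun x : hull_var -> R => x j) := affine_var j.
have hsum (F : K -> hull_var) : affine_fun (fun x : hull_var -> R => \sum_k x (F k)).
  exact: affine_sum (fun k => hv (F k)).
case: rr => [[[k r]|k]|[b|[v b]]] /=.
- by apply: affineD; [apply: affine_vdot | apply: affineZ; apply: hv].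
- by apply: affineN; apply: hv.
- by apply: affine_eq_rows; [apply: (hsum (fun k => inr (inr k))) | apply: affine_cst].
- by apply: affine_eq_rows; [apply: hv | apply: (hsum (fun k => inr (inl (k, inl v))))].
Qed.

Lemma hull_complete k z w : piece_sys k (join_fun z w) ->
  exists x, [/\ forall v, x (inl v) = z v, forall rr, hull_row rr x <= 0 &
                forall j, hull_int j -> x j \is a Num.int].
Proof.
move=> hk.
exists (join_fun z (join_fun
  (fun kj : K * (V + W) => if kj.1 == k then join_fun z w kj.2 else 0)
  (fun k' => if k' == k then 1 else 0))).
split=> // [[[[k' r]|k']|[b|[v b]]]|[//|[//|k']] _] /=;
  rewrite /hull_copy /hull_sel /= ?(big_mkcond (fun k' => k' == k)) ?big_pred1_eq.
- case: eqP => [->|_]; first by rewrite mulr1; apply: hk.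
  by rewrite vdot0r mulr0 addr0.
- by case: eqP; rewrite ?oppr0 ?oppr_le0.
- by move: b; apply/eq_rowsP; rewrite -big_mkcond big_pred1_eq.
- by move: b; apply/eq_rowsP; rewrite -big_mkcond big_pred1_eq.
- by case: eqP; rewrite ?rpred1 ?rpred0.
Qed.

Lemma hull_sound x : (forall rr, hull_row rr x <= 0) ->
    (forall j, hull_int j -> x j \is a Num.int) ->
  exists k w, piece_sys k (join_fun (fun v => x (inl v)) w).
Proof.
move=> hx hint.
have sel_ge0 k : 0 <= hull_sel x k by have := hx (inl (inr k)); rewrite /= oppr_le0.
have sel_sum : \sum_k hull_sel x k = 1 by apply/eq_rowsP => b; apply: hx (inr (inl b)).
have [k0 [sel1 sel0]] := int_sum1_unit sel_ge0 (fun k => hint (inr (inr k)) isT) sel_sum.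
(* An unselected copy is a recession direction of its (bounded) piece. *)
have copy0 k v : k != k0 -> hull_copy x k (inl v) = 0.
  move=> nk; apply: (@recession_inl k) => r.
  by have := hx (inl (inl (k, r))); rewrite /= sel0 // mulr0 addr0.
exists k0, (fun u => hull_copy x k0 (inr u)).
have -> : join_fun (fun v => x (inl v)) (fun u => hull_copy x k0 (inr u)) = hull_copy x k0.
  apply: funext => -[v|u] //=.
  have /eq_rowsP -> := fun b => hx (inr (inr (v, b))).
  by rewrite (bigD1 k0) //= big1 ?addr0 // => k /copy0 ->.
by move=> r; have := hx (inl (inl (k0, r))); rewrite /= sel1 mulr1.
Qed.

Lemma mi_representable_union_nonempty :
  mi_representable (fun z => exists k w, piece_sys k (join_fun z w)).
Proof.
exists hull_var, ((K * Rw + K) + (bool + V * bool))%type, inl, hull_row, hull_int.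
split=> [|z]; first exact: affine_hull_row.
split=> [[k [w /hull_complete]] //|[x [ex hx ix]]].
have [k [w hk]] := hull_sound hx ix; exists k, w.
by have -> : z = (fun v => x (inl v)) by apply: funext => v; rewrite ex.
Qed.

End BoundedUnion.

Lemma mi_representable_bounded_union (R : archiRealFieldType) (V W K Rw : finType)
    (L : K -> Rw -> (V + W -> R) -> R) (M : R) :
  (forall k r, affine_fun (L k r)) ->
  (forall k z w, (forall r, L k r (join_fun z w) <= 0) -> forall v, `|z v| <= M) ->
  mi_representable (fun z => exists k w, forall r, L k r (join_fun z w) <= 0).
Proof.
move=> hL hM.
have [c hc] := choice (fun kr : K * Rw => hL kr.1 kr.2); have [c0 hc0] := choice hc.
pose c' k r := c (k, r); pose c0' k r := c0 (k, r).
have hLc k r y : L k r y = vdot (c' k r) y + c0' k r := hc0 (k, r) y.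
(* Empty pieces add nothing to the union, and dropping them makes the
   recession argument available for all remaining pieces. *)
pose NE k := `[< exists y, piece_sys c' c0' k y >].
eapply mi_representable_ext.
  apply: (@mi_representable_union_nonempty R V W {k | NE k} Rw
    (fun s => c' (val s)) (fun s => c0' (val s)) M).
  - move=> s y hy v; have := hM (val s) (fun v => y (inl v)) (fun u => y (inr u)).
    by rewrite join_fun_split; apply=> r; rewrite hLc; apply: hy.
  - by case=> k hk; have /asboolP [y hy] := hk; exists y.
move=> z; split.
  by case=> -[k NEk] [w hk]; exists k, w => r; rewrite hLc; apply: hk.
case=> k [w hk].
have NEk : NE k by apply/asboolP; exists (join_fun z w) => r; rewrite -hLc.
by exists (exist _ k NEk), w => r; rewrite /= -hLc.
Qed.

Lemma affine_bounded (R : realFieldType) (Z : finType) (F : (Z -> R) -> R) (M : R) :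
  affine_fun F -> exists B, forall x, (forall j, `|x j| <= M) -> `|F x| <= B.
Proof.
case=> c [c0 hF]; exists (\sum_j `|c j| * M + `|c0|) => x hx.
rewrite hF (le_trans (ler_normD _ _)) // lerD2r (le_trans (ler_norm_sum _ _ _)) //.
by apply: ler_sum => j _; rewrite normrM ler_wpM2l.
Qed.

Section PiecewiseGraph.
Variables (R : archiRealFieldType) (V W K Rd Rp : finType).
Variables (dom : Rd -> (V -> R) -> R) (piece : K -> Rp -> (V -> R) -> R).
Variables (Gk : K -> W -> (V -> R) -> R) (gf : (V -> R) -> W -> R) (M : R).
Hypothesis dom_affine : forall d, affine_fun (dom d).
Hypothesis piece_affine : forall k s, affine_fun (piece k s).
Hypothesis Gk_affine : forall k w, affine_fun (Gk k w).
Hypothesis dom_bounded : forall z, (forall d, dom d z <= 0) -> forall v, `|z v| <= M.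
Hypothesis pieces_cover : forall z, (forall d, dom d z <= 0) ->
  exists k, forall s, piece k s z <= 0.
Hypothesis gf_piece : forall z k, (forall d, dom d z <= 0) -> (forall s, piece k s z <= 0) ->
  forall w, gf z w = Gk k w z.

Definition graph_row k (rr : Rd + (Rp + W * bool)) (y : (V + W) + void -> R) :=
  let z := fun v => y (inl (inl v)) in
  match rr with
  | inl d => dom d z
  | inr (inl s) => piece k s z
  | inr (inr (w, b)) => eq_rows (y (inl (inr w))) (Gk k w z) b
  end.

Lemma affine_graph_row k rr : affine_fun (graph_row k rr).
Proof.
have hz F : affine_fun F ->
    affine_fun (fun y : (V + W) + void -> R => F (fun v => y (inl (inl v)))).
  by move=> hF; apply: (affine_comp hF) => v; apply: affine_var.
case: rr => [d|[s|[w b]]] /=; [exact: hz (dom_affine d) | exact: hz (piece_affine k s) |].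
by apply: affine_eq_rows; [apply: affine_var | apply: hz (Gk_affine k w)].
Qed.

Theorem mi_representable_piecewise_graph : mi_representable
  (fun y : V + W -> R => (forall d, dom d (fun v => y (inl v)) <= 0) /\
                         forall w, y (inr w) = gf (fun v => y (inl v)) w).
Proof.
have /choice [B hB] : forall kw : K * W, exists B,
    forall z, (forall v, `|z v| <= M) -> `|Gk kw.1 kw.2 z| <= B.
  by move=> kw; apply: affine_bounded.
eapply mi_representable_ext.
  apply: (mi_representable_bounded_union (L := graph_row)
    (M := `|M| + \sum_kw `|B kw|) affine_graph_row).
  move=> k y w0 h v.
  have hd : forall d, dom d (fun v => y (inl v)) <= 0 by move=> d; apply: h (inl d).
  have hM := dom_bounded hd; have := normr_ge0 M; have := ler_norm M.
  have : 0 <= \sum_kw `|B kw| by apply: sumr_ge0.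
  case: v => [v|w] ? ? ?; first by have := hM v; lra.
  have /eq_rowsP /= -> := fun b => h (inr (inr (w, b))).
  have hkw : `|B (k, w)| <= \sum_kw `|B kw|.
    by rewrite (bigD1 (k, w)) //= lerDl sumr_ge0.
  by have := hB (k, w) _ hM; have := ler_norm (B (k, w)); lra.
move=> y; split.
  case=> k [w0 h].
  have hd : forall d, dom d (fun v => y (inl v)) <= 0 by move=> d; apply: h (inl d).
  split=> // w; rewrite (gf_piece hd (k := k)) => [|s]; last exact: h (inr (inl s)).
  by apply/eq_rowsP => b; apply: h (inr (inr (w, b))).
case=> hd hg; have [k hk] := pieces_cover hd.
exists k, (fun v : void => match v with end).
case=> [d|[s|[w b]]] /=; [exact: hd d | exact: hk s |].
by move: b; apply/eq_rowsP; rewrite hg (gf_piece hd hk).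
Qed.

End PiecewiseGraph.

Section MatrixForm.
Variable R : archiRealFieldType.

Lemma sum_enum_val (Z : finType) (F : Z -> R) :
  \sum_(j < #|Z|) F (enum_val j) = \sum_j F j.
Proof. by rewrite -(big_enum_val (A := Z)) /=; apply: eq_bigl => j; rewrite inE. Qed.

Lemma mi_representable_mixed_integer_set n (S : 'cV[R]_n -> Prop) :
  mixed_integer_set S -> mi_representable (fun z : 'I_n -> R => S (\col_i z i)).
Proof.
move=> [k [mr [A [b [I h]]]]].
exists 'I_(n + k), 'I_mr, (fun i => lshift k i).
exists (fun r x => vdot (fun j => A r j) x - b r 0), I; split.
  by move=> r; exists (fun j => A r j), (- b r 0).
move=> z; rewrite h; split.
  case=> w [hA hI]; exists (fun j => col_mx (\col_i z i) w j 0); split=> [v|r|j /hI //].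
    by rewrite col_mxEu mxE.
  by have := hA r; rewrite mxE subr_le0.
case=> x [ex hx ix]; exists (\col_i x (rshift n i)).
have -> : col_mx (\col_i z i) (\col_i x (rshift n i)) = \col_j x j.
  apply/matrixP => j c; rewrite (ord1 c) mxE -(splitK j).
  by case: (fintype.split j) => i /=; rewrite ?col_mxEu ?col_mxEd !mxE ?ex.
split=> [r|j /ix]; last by rewrite mxE.
move: (hx r); rewrite subr_le0 => hr; rewrite mxE.
by rewrite (eq_bigr (fun j => A r j * x j)) // => j _; rewrite mxE.
Qed.

Lemma mi_representable_mx (V : finType) (S : (V -> R) -> Prop) : mi_representable S ->
  exists (M Kc : nat) (A : 'M[R]_(Kc, M)) (b : 'cV[R]_Kc) (I : pred 'I_M) (emb : V -> 'I_M),
    forall xi, S xi <-> exists z : 'cV[R]_M,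
      [/\ leV (A *m z) b, int_on I z & forall v, z (emb v) 0 = xi v].
Proof.
move=> [Z [Rw [e [L [I [hL hS]]]]]]; have [c /choice [c0 hc]] := choice hL.
pose A : 'M[R]_(#|Rw|, #|Z|) := \matrix_(r, j) c (enum_val r) (enum_val j).
exists #|Z|, #|Rw|, A, (\col_r - c0 (enum_val r)), [pred j | I (enum_val j)].
exists (fun v => enum_rank (e v)).
have AzE (z : 'cV[R]_#|Z|) r : (A *m z) r 0 = vdot (c (enum_val r)) (fun j => z (enum_rank j) 0).
  rewrite mxE /vdot -(sum_enum_val (fun j => c (enum_val r) j * z (enum_rank j) 0)).
  by apply: eq_bigr => j _; rewrite mxE enum_valK.
move=> xi; rewrite hS; split.
  case=> x [ex hx ix]; exists (\col_j x (enum_val j)); split=> [r|j|v].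
  - rewrite AzE mxE (_ : (fun j => _) = x); last by apply: funext => j; rewrite mxE enum_rankK.
    by have := hx (enum_val r); rewrite hc; lra.
  - by rewrite mxE; apply: ix.
  - by rewrite mxE enum_rankK ex.
case=> z [hz iz ez]; exists (fun j => z (enum_rank j) 0); split=> [v|r|j hj].
- exact: ez.
- by have := hz (enum_rank r); rewrite AzE mxE enum_rankK hc; lra.
- by have := iz (enum_rank j); rewrite /= enum_rankK; apply.
Qed.

End MatrixForm.

Section ParametricQP.
Variables (R : realFieldType) (P Y Rw : finType).
Variables (Phi : (P + Y -> R) -> R) (G : (P + Y -> R) -> P + Y -> R) (F2 : (P + Y -> R) -> R).
Variables (a : Rw -> P + Y -> R) (a0 : Rw -> R).
Hypothesis Phi_expand : forall x d t,
  Phi (fun j => x j + t * d j) = Phi x + t * vdot (G x) d + t ^+ 2 * F2 d.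
Hypothesis Phi_concave : forall p y d,
  Phi (join_fun p (fun j => y j + d j)) + Phi (join_fun p (fun j => y j - d j)) <=
  2 * Phi (join_fun p y).

Definition qp_cons r (x : P + Y -> R) := vdot (a r) x + a0 r.

Definition qp_feasible p y := forall r, qp_cons r (join_fun p y) <= 0.

Definition qp_optimal p y := qp_feasible p y /\
  forall y', qp_feasible p y' -> Phi (join_fun p y') <= Phi (join_fun p y).

Definition qp_kkt p y (lam : Rw -> R) :=
  [/\ forall r, 0 <= lam r, forall r, lam r * qp_cons r (join_fun p y) = 0 &
      forall j, G (join_fun p y) (inr j) = \sum_r lam r * a r (inr j)].

Lemma vdot_join (c : P + Y -> R) p y :
  vdot c (join_fun p y) = vdot (fun i => c (inl i)) p + vdot (fun j => c (inr j)) y.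
Proof. by rewrite /vdot big_sumType. Qed.

Lemma join_fun_line p (y d : Y -> R) t :
  join_fun p (fun j => y j + t * d j) =
  (fun j => join_fun p y j + t * join_fun (fun _ : P => 0) d j).
Proof. by apply: funext => -[i|j] //=; rewrite mulr0 addr0. Qed.

Lemma qp_expand p y d t :
  Phi (join_fun p (fun j => y j + t * d j)) = Phi (join_fun p y) +
    t * vdot (fun j => G (join_fun p y) (inr j)) d + t ^+ 2 * F2 (join_fun (fun _ : P => 0) d).
Proof. by rewrite join_fun_line Phi_expand vdot_join vdot0r add0r. Qed.

(* The second-order term along the decision variables is read off at t = 1, -1. *)
Lemma qp_curvature_le0 d : F2 (join_fun (fun _ : P => 0) d) <= 0.
Proof.
pose p0 (i : P) : R := 0; pose y0 (j : Y) : R := 0.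
have := Phi_concave p0 y0 d; have := qp_expand p0 y0 d 1; have := qp_expand p0 y0 d (-1).
rewrite (_ : (fun j => y0 j + -1 * d j) = fun j => y0 j - d j); last first.
  by apply: funext => j; rewrite mulN1r.
rewrite (_ : (fun j => y0 j + 1 * d j) = fun j => y0 j + d j); last first.
  by apply: funext => j; rewrite mul1r.
move=> -> ->; rewrite sqrrN expr1n; lra.
Qed.

Lemma qp_optimalP p y : qp_feasible p y -> qp_optimal p y <-> exists lam, qp_kkt p y lam.
Proof.
pose a' r j := a r (inr j); pose b r := - (vdot (fun i => a r (inl i)) p + a0 r).
have consE r y' : qp_cons r (join_fun p y') = vdot (a' r) y' - b r.
  by rewrite /qp_cons vdot_join /b opprK addrCA addrA.
have feasE y' : qp_feasible p y' <-> lin_feasible a' b y'.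
  by split=> h r; have := h r; rewrite consE subr_le0.
move=> fy; have := kkt_optimal (qp_expand p) qp_curvature_le0 ((feasE y).1 fy).
move=> [opt_kkt kkt_opt]; split.
  case=> _ opt; have [lam [l0 compl stat]] : exists lam, kkt_multiplier a' b
      (fun j => G (join_fun p y) (inr j)) y lam.
    by apply: opt_kkt => y' /feasE; apply: opt.
  exists lam; split=> // r; rewrite consE -opprB mulrN.
  by rewrite compl oppr0.
case=> lam [l0 compl stat]; split=> // y' /feasE; apply: kkt_opt.
exists lam; split=> // r; rewrite -[b r - _]opprK opprB -consE mulrN.
by rewrite compl oppr0.
Qed.

End ParametricQP.

Section QPArgmax.
Variables (R : archiRealFieldType) (P Yv Yh Rw Rs : finType).
Local Notation Y := (Yv + Yh)%type.
Variables (Phi : (P + Y -> R) -> R) (G : (P + Y -> R) -> P + Y -> R) (F2 : (P + Y -> R) -> R).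
Variables (a : Rw -> P + Y -> R) (a0 : Rw -> R) (side : Rs -> (P -> R) -> R) (M : R).
Hypothesis Phi_expand : forall x d t,
  Phi (fun j => x j + t * d j) = Phi x + t * vdot (G x) d + t ^+ 2 * F2 d.
Hypothesis Phi_concave : forall p y d,
  Phi (join_fun p (fun j => y j + d j)) + Phi (join_fun p (fun j => y j - d j)) <=
  2 * Phi (join_fun p y).
Hypothesis G_affine : forall j, affine_fun (fun x => G x j).
Hypothesis side_affine : forall s, affine_fun (side s).
Hypothesis qp_bounded : forall p y, (forall s, side s p <= 0) -> qp_feasible a a0 p y ->
  (forall i, `|p i| <= M) /\ (forall v, `|y (inl v)| <= M).

Definition qp_argmax (z : P + Yv -> R) :=
  (forall s, side s (fun i => z (inl i)) <= 0) /\
  exists yh, qp_optimal Phi a a0 (fun i => z (inl i)) (join_fun (fun v => z (inr v)) yh).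

Definition kkt_index (j : P + Y) : (P + Yv) + (Yh + Rw) :=
  match j with
  | inl i => inl (inl i) | inr (inl v) => inl (inr v) | inr (inr h) => inr (inl h)
  end.

Definition kkt_point (zw : (P + Yv) + (Yh + Rw) -> R) j := zw (kkt_index j).
Definition kkt_lam (zw : (P + Yv) + (Yh + Rw) -> R) r := zw (inr (inr r)).

(* Complementary slackness [lam r * cons r = 0] is linearized by the choice
   [dl r] of the constraints that are active. *)
Definition kkt_row (dl : {ffun Rw -> bool}) (rr : Rs + (Rw + (Rw + ((Y * bool) + Rw))))
    (zw : (P + Yv) + (Yh + Rw) -> R) :=
  match rr with
  | inl s => side s (fun i => zw (inl (inl i)))
  | inr (inl r) => qp_cons a a0 r (kkt_point zw)
  | inr (inr (inl r)) => - kkt_lam zw r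
  | inr (inr (inr (inl (j, b)))) =>
      eq_rows (G (kkt_point zw) (inr j)) (\sum_r kkt_lam zw r * a r (inr j)) b
  | inr (inr (inr (inr r))) =>
      if dl r then - qp_cons a a0 r (kkt_point zw) else kkt_lam zw r
  end.

Lemma affine_kkt_row dl rr : affine_fun (kkt_row dl rr).
Proof.
have hv j : affine_fun (fun zw : (P + Yv) + (Yh + Rw) -> R => zw j) := affine_var j.
have hcons r : affine_fun (fun zw => qp_cons a a0 r (kkt_point zw)).
  by apply: affineD _ (affine_cst _); apply: affine_vdot.
case: rr => [s|[r|[r|[[j b]|r]]]]; rewrite /kkt_row /=.
- by apply: (affine_comp (side_affine s)) => i; apply: hv.
- exact: hcons.
- by apply: affineN; apply: hv.
- apply: affine_eq_rows; first by apply: (affine_comp (G_affine (inr j))) => i; apply: hv.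
  by apply: affine_sum => r; apply: affineMr; apply: hv.
- by case: (dl r); [apply: affineN; apply: hcons | apply: hv].
Qed.

Lemma kkt_point_join z w : kkt_point (join_fun z w) =
  join_fun (fun i => z (inl i)) (join_fun (fun v => z (inr v)) (fun h => w (inl h))).
Proof. by apply: funext => -[i|[v|h]]. Qed.

Lemma kkt_row_feasible dl z w : (forall rr, kkt_row dl rr (join_fun z w) <= 0) ->
  qp_feasible a a0 (fun i => z (inl i)) (join_fun (fun v => z (inr v)) (fun h => w (inl h))).
Proof. by move=> h r; have := h (inr (inl r)); rewrite /= kkt_point_join. Qed.

Lemma qp_argmax_kkt z :
  qp_argmax z <-> exists dl w, forall rr, kkt_row dl rr (join_fun z w) <= 0.
Proof.
split.
  case=> hside [yh [fy opt]].
  have [lam [l0 compl stat]] := (qp_optimalP Phi_expand Phi_concave fy).1 (conj fy opt).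
  exists [ffun r => lam r != 0], (join_fun yh lam).
  case=> [s|[r|[r|[[j b]|r]]]] /=; rewrite ?kkt_point_join.
  - exact: hside.
  - exact: fy.
  - by rewrite oppr_le0.
  - by move: b; apply/eq_rowsP; rewrite stat.
  - rewrite ffunE /=; case: ifP => [nz|/negbFE/eqP l0r]; last by rewrite /kkt_lam /= l0r.
    have /eqP := compl r; rewrite mulf_eq0 (negbTE nz) /= => /eqP ->.
    by rewrite oppr0.
case=> dl [w h]; split=> [s|]; first exact: h (inl s).
exists (fun h => w (inl h)); have fy := kkt_row_feasible h.
apply/(qp_optimalP Phi_expand Phi_concave fy); exists (fun r => w (inr r)); split.
- by move=> r; have := h (inr (inr (inl r))); rewrite /= oppr_le0.
- move=> r; have := h (inr (inr (inl r))); have := h (inr (inr (inr (inr r)))).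
  rewrite /= /kkt_lam /= kkt_point_join; have := fy r.
  case: (dl r) => hf hc hl; apply/eqP; rewrite mulf_eq0; apply/orP; [right|left].
    by rewrite eq_le hf -oppr_le0 hc.
  by rewrite eq_le hc -oppr_le0 hl.
- move=> j; apply/eq_rowsP => b; have := h (inr (inr (inr (inl (j, b))))).
  by rewrite /= kkt_point_join.
Qed.

Theorem mi_representable_qp_argmax : mi_representable qp_argmax.
Proof.
eapply mi_representable_ext.
  apply: (mi_representable_bounded_union (L := kkt_row) (M := M) affine_kkt_row).
  move=> dl z w h.
  have [bp by_] := qp_bounded (fun s => h (inl s)) (kkt_row_feasible h).
  by case=> [i|v]; [apply: bp | apply: by_].
by move=> z; rewrite qp_argmax_kkt.
Qed.

End QPArgmax.

Lemma minJ_ge (R : realDomainType) n (F : 'I_n.+1 -> R) s :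
  s <= minJ F <-> forall j, s <= F j.
Proof.
split=> [h j|h]; first exact: le_trans h (bigmin_le _ _ _).
by apply: le_bigmin.
Qed.

Lemma minJ_le (R : realDomainType) n (F : 'I_n.+1 -> R) j : minJ F <= F j.
Proof. exact: bigmin_le. Qed.

Lemma leV_subr_le0 (R : numDomainType) r n (M : 'M[R]_(r, n)) x b :
  leV (M *m x) b <-> forall a, (M *m x) a 0 - b a 0 <= 0.
Proof. by split=> h a; [rewrite subr_le0 h | rewrite -subr_le0 h]. Qed.

Section Agent.
Variables (R : archiRealFieldType) (nx nu nth npi : nat).
Variables (Q : 'M[R]_(nx + nu)) (H : 'M[R]_(nth + npi, nx + nu)) (K : nat) (m : 'I_K -> nat)
  (F : forall i : 'I_K, 'I_(m i).+1 -> 'rV[R]_(nx + nu + nth + npi))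
  (zeta : forall i : 'I_K, 'I_(m i).+1 -> R).
Variables (A : 'M[R]_nx) (B : 'M[R]_(nx, nu)) (k : 'cV[R]_nx) (p : 'cV[R]_npi).
Variables (X : 'cV[R]_nx -> Prop) (U : 'cV[R]_nu -> Prop) (Th : 'cV[R]_nth -> Prop).
Variables (mX mU mTh : nat) (AX : 'M[R]_(mX, nx)) (bX : 'cV[R]_mX)
  (AU : 'M[R]_(mU, nu)) (bU : 'cV[R]_mU) (ATh : 'M[R]_(mTh, nth)) (bTh : 'cV[R]_mTh).
Hypothesis hX : forall x, X x <-> leV (AX *m x) bX.
Hypothesis hU : forall u, U u <-> leV (AU *m u) bU.
Hypothesis hTh : forall th, Th th <-> leV (ATh *m th) bTh.
Variables (MX MU MTh : R).
Hypothesis bdX : forall x, X x -> forall i, `|x i 0| <= MX.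
Hypothesis bdU : forall u, U u -> forall i, `|u i 0| <= MU.
Hypothesis bdTh : forall th, Th th -> forall i, `|th i 0| <= MTh.
Hypothesis PSDQ : PSD Q.

Definition lin_dyn x u := A *m x + B *m u + k.
Definition agent_util x u th := f_util Q H F zeta (lin_dyn x u) u th p.
Definition agent_term x u th i j := (@F i j *m cat4 (lin_dyn x u) u th p) 0 0 + @zeta i j.
Arguments agent_term : clear implicits.

Definition agent_argmax (z : ('I_nx + 'I_nth) + 'I_nu -> R) :=
  let x := \col_i z (inl (inl i)) in let th := \col_i z (inl (inr i)) in
  let u := \col_i z (inr i) in
  [/\ X x, Th th, U u & forall v, U v -> agent_util x v th <= agent_util x u th].

Local Notation agent_var := (('I_nx + 'I_nth) + ('I_nu + 'I_K))%type.

(* The agent's problem in epigraph form: the decision is [(u, s)], the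
   parameter is [(x, th)], and [s i] stands for the [i]-th min-term of f. *)
Definition agent_x (xi : agent_var -> R) := \col_i xi (inl (inl i)).
Definition agent_th (xi : agent_var -> R) := \col_i xi (inl (inr i)).
Definition agent_u (xi : agent_var -> R) := \col_i xi (inr (inl i)).
Definition agent_state xi := col_mx (lin_dyn (agent_x xi) (agent_u xi)) (agent_u xi).

Definition agent_obj xi :=
  - bform (agent_state xi) Q (agent_state xi) +
  bform (col_mx (agent_th xi) p) H (agent_state xi) + \sum_i xi (inr (inr i)).

Definition agent_cons (r : 'I_mU + {i : 'I_K & 'I_(m i).+1}) xi :=
  match r with
  | inl a => (AU *m agent_u xi) a 0 - bU a 0
  | inr s => xi (inr (inr (tag s))) -
             agent_term (agent_x xi) (agent_u xi) (agent_th xi) (tag s) (tagged s)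
  end.

Definition agent_side (s : 'I_mX + 'I_mTh) (q : 'I_nx + 'I_nth -> R) :=
  match s with
  | inl a => (AX *m \col_i q (inl i)) a 0 - bX a 0
  | inr a => (ATh *m \col_i q (inr i)) a 0 - bTh a 0
  end.

Lemma affine_vec_state : affine_vec agent_state.
Proof.
rewrite /agent_state /lin_dyn /agent_u /agent_x.
apply: affine_vec_col_mx; last exact: affine_vec_col.
apply: affine_vecD; last exact: affine_vec_cst.
by apply: affine_vecD; apply: affine_vecM; apply: affine_vec_col.
Qed.

Lemma quadratic_agent_obj : quadratic_fun agent_obj.
Proof.
have hs := affine_vec_state.
have hT : affine_vec (fun xi => col_mx (agent_th xi) p).
  by apply: affine_vec_col_mx; [apply: affine_vec_col | apply: affine_vec_cst].
apply: quadraticD; last by apply: affine_quadratic; apply: affine_sum => i; apply: affine_var.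
apply: quadraticD (quadratic_bform H hT hs).
exact: quadratic_ext (fun xi => mulN1r _) (quadraticZ (-1) (quadratic_bform Q hs hs)).
Qed.

Lemma affine_agent_cons r : affine_fun (agent_cons r).
Proof.
case: r => [a|[i j]] /=.
  apply: affineB; last exact: affine_cst.
  exact: (affine_vecM AU (affine_vec_col (fun i => inr (inl i) : agent_var)) a).
apply: affineB; first exact: affine_var.
apply: affineD; last exact: affine_cst.
apply: (affine_vecM (@F i j)).
apply: affine_vec_col_mx; last exact: affine_vec_cst.
apply: affine_vec_col_mx; last exact: affine_vec_col.
exact: affine_vec_state.
Qed.

Lemma affine_agent_side s : affine_fun (agent_side s).
Proof.
case: s => a; apply: affineB _ (affine_cst _).
  exact: (affine_vecM AX (affine_vec_col (fun i => inl i : 'I_nx + 'I_nth)) a).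
exact: (affine_vecM ATh (affine_vec_col (fun i => inr i : 'I_nx + 'I_nth)) a).
Qed.

Lemma lin_dynD x u v : lin_dyn x (u + v) = lin_dyn x u + B *m v.
Proof. by rewrite /lin_dyn mulmxDr -!addrA [B *m v + k]addrC. Qed.

Lemma agent_state_shift q (y d : 'I_nu + 'I_K -> R) (e : R) :
  agent_state (join_fun q (fun j => y j + e * d j)) =
  agent_state (join_fun q y) + e *: col_mx (B *m \col_i d (inl i)) (\col_i d (inl i)).
Proof.
rewrite /agent_state.
have -> : agent_u (join_fun q (fun j => y j + e * d j)) =
    agent_u (join_fun q y) + e *: \col_i d (inl i).
  by apply/matrixP => i j; rewrite !mxE.
by rewrite lin_dynD scale_col_mx add_col_mx scalemxAr.
Qed.

Lemma agent_obj_concave q (y d : 'I_nu + 'I_K -> R) :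
  agent_obj (join_fun q (fun j => y j + d j)) + agent_obj (join_fun q (fun j => y j - d j)) <=
  2 * agent_obj (join_fun q y).
Proof.
pose D := col_mx (B *m \col_i d (inl i)) (\col_i d (inl i)).
have h1 : agent_state (join_fun q (fun j => y j + d j)) = agent_state (join_fun q y) + D.
  have := agent_state_shift q y d 1; rewrite scale1r => <-.
  by congr (agent_state (join_fun q _)); apply: funext => j; rewrite mul1r.
have h2 : agent_state (join_fun q (fun j => y j - d j)) = agent_state (join_fun q y) - D.
  have := agent_state_shift q y d (-1); rewrite scaleN1r => <-.
  by congr (agent_state (join_fun q _)); apply: funext => j; rewrite mulN1r.
rewrite /agent_obj h1 h2 [bform _ H (_ + D)]bformDr [bform _ H (_ - D)]bformDr bformNr.
have := bform_parallelogram Q (agent_state (join_fun q y)) D.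
have := PSDQ D; rewrite -/(bform D Q D) /agent_th /=.
rewrite (_ : \sum_i (y (inr i) + d (inr i)) = \sum_i y (inr i) + \sum_i d (inr i));
  last by rewrite big_split.
rewrite (_ : \sum_i (y (inr i) - d (inr i)) = \sum_i y (inr i) - \sum_i d (inr i));
  last by rewrite sumrB.
lra.
Qed.

Lemma agent_sideP q : (forall s, agent_side s q <= 0) <->
  X (\col_i q (inl i)) /\ Th (\col_i q (inr i)).
Proof.
rewrite hX hTh !leV_subr_le0.
by split=> [h|[h1 h2] [a|a]]; [split=> a; [apply: h (inl a)|apply: h (inr a)]|apply: h1|apply: h2].
Qed.

Lemma agent_feasibleP q y : (forall r, agent_cons r (join_fun q y) <= 0) <->
  U (\col_i y (inl i)) /\ forall i, y (inr i) <= minJ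
    (agent_term (\col_i q (inl i)) (\col_i y (inl i)) (\col_i q (inr i)) i).
Proof.
rewrite hU leV_subr_le0; split=> [h|[hu hs] [a|[i j]]].
- split=> [a|i]; first exact: h (inl a).
  by apply/minJ_ge => j; rewrite -subr_le0; apply: h (inr (existT _ i j)).
- exact: hu.
- by rewrite /= subr_le0 (le_trans (hs i)) // minJ_le.
Qed.

Lemma agent_obj_util q (v : 'cV[R]_nu) :
  let x := \col_i q (inl i) in let th := \col_i q (inr i) in
  agent_obj (join_fun q (join_fun (fun i => v i 0) (fun i => minJ (agent_term x v th i)))) =
  agent_util x v th.
Proof. by rewrite /agent_obj /agent_state /agent_u col_eta. Qed.

Lemma agent_obj_le_util q y : (forall r, agent_cons r (join_fun q y) <= 0) ->
  agent_obj (join_fun q y) <=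
  agent_util (\col_i q (inl i)) (\col_i y (inl i)) (\col_i q (inr i)).
Proof.
case/agent_feasibleP=> _ hs; rewrite /agent_obj /agent_util /f_util lerD2l.
by apply: ler_sum => i _; apply: hs.
Qed.

Lemma agent_epi_feasible q (v : 'cV[R]_nu) : U v ->
  let x := \col_i q (inl i) in let th := \col_i q (inr i) in
  forall r, agent_cons r
    (join_fun q (join_fun (fun i => v i 0) (fun i => minJ (agent_term x v th i)))) <= 0.
Proof. by move=> hv x th; apply/agent_feasibleP; rewrite col_eta. Qed.

Lemma agent_argmaxE a a0 : (forall r x, qp_cons a a0 r x = agent_cons r x) ->
  forall z, agent_argmax z <-> qp_argmax agent_obj a a0 agent_side z.
Proof.
move=> consE z; rewrite /agent_argmax /qp_argmax.
set q := fun i => z (inl i); set x := \col_i z (inl (inl i)); set th := \col_i z (inl (inr i)).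
set u := \col_i z (inr i).
have feasE y : qp_feasible a a0 q y <-> forall r, agent_cons r (join_fun q y) <= 0.
  by split=> h r; have := h r; rewrite consE.
split.
  case=> hx hth hu opt; split; first exact/agent_sideP.
  have eu : (fun i => u i 0) = (fun v => z (inr v)) by apply: funext => i; rewrite mxE.
  have := agent_obj_util q u; have := agent_epi_feasible q hu; rewrite eu => fu uE.
  exists (fun i => minJ (agent_term x u th i)); split; first exact/feasE.
  move=> y' /feasE fy'; rewrite uE; apply: le_trans (agent_obj_le_util fy') _.
  by apply: opt; case/agent_feasibleP: fy'.
case=> /agent_sideP [hx hth] [yh [/feasE fy opt]].
have [hu _] := (agent_feasibleP q _).1 fy.
split=> // v hv; rewrite -(agent_obj_util q v).
apply: le_trans (opt _ (proj2 (feasE _) (agent_epi_feasible q hv))) _.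
exact: agent_obj_le_util fy.
Qed.

Theorem mi_representable_agent_argmax : mi_representable agent_argmax.
Proof.
have [G [F2 [G_affine Phi_expand]]] := quadratic_expand quadratic_agent_obj.
have [a /choice [a0 consE]] := choice affine_agent_cons.
have argmaxE := agent_argmaxE (fun r x => esym (consE r x)).
apply: (mi_representable_ext (S := qp_argmax agent_obj a a0 agent_side)); last first.
  by move=> z; rewrite argmaxE.
apply: (mi_representable_qp_argmax (M := `|MX| + `|MTh| + `|MU|) Phi_expand
  agent_obj_concave G_affine affine_agent_side).
move=> q y /agent_sideP [hx hth] fy.
have /agent_feasibleP [hu _] : forall r, agent_cons r (join_fun q y) <= 0.
  by move=> r; have := fy r; rewrite /qp_cons -consE.
have := normr_ge0 MX; have := normr_ge0 MTh; have := normr_ge0 MU.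
have := ler_norm MX; have := ler_norm MTh; have := ler_norm MU.
split=> [[i|i]|i].
- by have := bdX hx i; rewrite mxE; lra.
- by have := bdTh hth i; rewrite mxE; lra.
- by have := bdU hu i; rewrite mxE; lra.
Qed.

End Agent.

Section Transition.
Variables (R : archiRealFieldType) (nx nu nth npi : nat).
Variables (X : 'cV[R]_nx -> Prop) (U : 'cV[R]_nu -> Prop) (Th : 'cV[R]_nth -> Prop).
Variables (mX mU mTh : nat) (AX : 'M[R]_(mX, nx)) (bX : 'cV[R]_mX)
  (AU : 'M[R]_(mU, nu)) (bU : 'cV[R]_mU) (ATh : 'M[R]_(mTh, nth)) (bTh : 'cV[R]_mTh).
Hypothesis hX : forall x, X x <-> leV (AX *m x) bX.
Hypothesis hU : forall u, U u <-> leV (AU *m u) bU.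
Hypothesis hTh : forall th, Th th <-> leV (ATh *m th) bTh.
Variables (MX MU MTh : R).
Hypothesis bdX : forall x, X x -> forall i, `|x i 0| <= MX.
Hypothesis bdU : forall u, U u -> forall i, `|u i 0| <= MU.
Hypothesis bdTh : forall th, Th th -> forall i, `|th i 0| <= MTh.
Variables (g : 'cV[R]_nx -> 'cV[R]_nu -> 'cV[R]_nth -> 'cV[R]_npi -> 'cV[R]_nth)
  (P : nat) (r : 'I_P -> nat)
  (Bg : forall i : 'I_P, 'M[R]_(r i, nx + nu + nth + npi))
  (psi : forall i : 'I_P, 'cV[R]_(r i))
  (G : forall i : 'I_P, 'M[R]_(nth, nx + nu + nth + npi))
  (chi : forall i : 'I_P, 'cV[R]_nth) (p : 'cV[R]_npi).
Hypothesis g_pieces : forall x u th, X x -> U u -> Th th ->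
  exists i, leV (Bg i *m cat4 x u th p) (psi i).
Hypothesis g_affine_on : forall x u th i, X x -> U u -> Th th ->
  leV (Bg i *m cat4 x u th p) (psi i) -> g x u th p = G i *m cat4 x u th p + chi i.

Local Notation trans_var := (('I_nx + 'I_nu) + 'I_nth)%type.

Definition trans_x (z : trans_var -> R) := \col_i z (inl (inl i)).
Definition trans_u (z : trans_var -> R) := \col_i z (inl (inr i)).
Definition trans_th (z : trans_var -> R) := \col_i z (inr i).
Definition trans_cat (z : trans_var -> R) := cat4 (trans_x z) (trans_u z) (trans_th z) p.

Definition trans_graph (y : trans_var + 'I_nth -> R) :=
  let z := fun v => y (inl v) in
  [/\ X (trans_x z), U (trans_u z), Th (trans_th z) &
      \col_i y (inr i) = g (trans_x z) (trans_u z) (trans_th z) p].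

Definition trans_dom (d : ('I_mX + 'I_mU) + 'I_mTh) (z : trans_var -> R) :=
  match d with
  | inl (inl a) => (AX *m trans_x z) a 0 - bX a 0
  | inl (inr a) => (AU *m trans_u z) a 0 - bU a 0
  | inr a => (ATh *m trans_th z) a 0 - bTh a 0
  end.

(* Rows of the other pieces are padded with zeros to give all pieces the
   same index type. *)
Definition trans_piece (k : 'I_P) (s : {i : 'I_P & 'I_(r i)}) (z : trans_var -> R) :=
  if tag s == k then (Bg (tag s) *m trans_cat z) (tagged s) 0 - psi (tag s) (tagged s) 0
  else 0.

Lemma affine_vec_trans_cat : affine_vec trans_cat.
Proof.
apply: affine_vec_col_mx; last exact: affine_vec_cst.
by do 2 (apply: affine_vec_col_mx; last exact: affine_vec_col); apply: affine_vec_col.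
Qed.

Lemma trans_domP z : (forall d, trans_dom d z <= 0) <->
  [/\ X (trans_x z), U (trans_u z) & Th (trans_th z)].
Proof.
split=> [h|[/hX/leV_subr_le0 h1 /hU/leV_subr_le0 h2 /hTh/leV_subr_le0 h3]]; last first.
  by case=> [[a|a]|a]; [apply: h1 | apply: h2 | apply: h3].
split; [apply/hX | apply/hU | apply/hTh]; apply/leV_subr_le0 => a.
- exact: h (inl (inl a)).
- exact: h (inl (inr a)).
- exact: h (inr a).
Qed.

Lemma trans_pieceP k z : (forall s, trans_piece k s z <= 0) <->
  leV (Bg k *m trans_cat z) (psi k).
Proof.
rewrite leV_subr_le0; split=> [h a|h [i a]].
  by have := h (existT _ k a); rewrite /trans_piece eqxx.
by rewrite /trans_piece /=; case: eqP => // eik; subst k; apply: h.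
Qed.

Theorem mi_representable_trans_graph : mi_representable trans_graph.
Proof.
eapply mi_representable_ext.
  apply: (@mi_representable_piecewise_graph R trans_var 'I_nth 'I_P _ _ trans_dom trans_piece
    (fun k w z => (G k *m trans_cat z + chi k) w 0)
    (fun z w => g (trans_x z) (trans_u z) (trans_th z) p w 0) (`|MX| + `|MU| + `|MTh|)).
  - case=> [[a|a]|a]; apply: affineB _ (affine_cst _).
    + exact: (affine_vecM AX (affine_vec_col (fun i => inl (inl i) : trans_var)) a).
    + exact: (affine_vecM AU (affine_vec_col (fun i => inl (inr i) : trans_var)) a).
    + exact: (affine_vecM ATh (affine_vec_col (fun i => inr i : trans_var)) a).
  - move=> k s; rewrite /trans_piece; case: eqP => _; last exact: affine_cst.
    apply: affineB _ (affine_cst _).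
    exact: (affine_vecM (Bg (tag s)) affine_vec_trans_cat (tagged s)).
  - move=> k w; apply: (affine_vecD (affine_vecM (G k) affine_vec_trans_cat)).
    exact: affine_vec_cst.
  - move=> z /trans_domP [hx hu hth].
    have := normr_ge0 MX; have := normr_ge0 MU; have := normr_ge0 MTh.
    have := ler_norm MX; have := ler_norm MU; have := ler_norm MTh.
    move=> ? ? ? ? ? ? [[i|i]|i].
    + by have := bdX hx i; rewrite mxE; lra.
    + by have := bdU hu i; rewrite mxE; lra.
    + by have := bdTh hth i; rewrite mxE; lra.
  - by move=> z /trans_domP [hx hu hth]; have [k /trans_pieceP] := g_pieces hx hu hth; exists k.
  - move=> z k /trans_domP [hx hu hth] /trans_pieceP hk w.
    by rewrite (g_affine_on hx hu hth hk).
move=> y; split.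
  case=> /trans_domP [hx hu hth] hg; split=> //.
  by apply/matrixP => i j; rewrite (ord1 j) mxE hg.
case=> hx hu hth hg; split; first exact/trans_domP.
by move=> w; rewrite -hg mxE.
Qed.

End Transition.

Lemma traj_feasible_ext (R : realDomainType) (nx nu nth npi : nat)
    (X : 'cV[R]_nx -> Prop) (U : 'cV[R]_nu -> Prop) (Th : 'cV[R]_nth -> Prop) f h g pi N
    (x x' : nat -> 'cV[R]_nx) (u u' : nat -> 'cV[R]_nu) (th th' : nat -> 'cV[R]_nth) :
  (forall t, (t <= N.+1)%N -> x' t = x t /\ th' t = th t) ->
  (forall t, (t <= N)%N -> u' t = u t) ->
  traj_feasible (npi := npi) X U Th f h g pi N x u th ->
  traj_feasible X U Th f h g pi N x' u' th'.
Proof.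
move=> ex eu [hstep hstate]; split=> t ht; last by have [-> ->] := ex t ht; apply: hstate.
have [ex1 eth1] := ex t (leqW ht); have [ex2 eth2] := ex t.+1 ht.
by rewrite ex1 eth1 ex2 eth2 eu //; apply: hstep.
Qed.

Lemma mi_representable_log_hypo (R : realType) (V : finType) n (p : R -> R)
    (E : (V -> R) -> 'cV[R]_n) (c : V) :
  log_density_milp p n -> affine_vec E ->
  mi_representable (fun xi => 0 < pvec p (E xi) /\ xi c <= ln (pvec p (E xi))).
Proof.
move=> /mi_representable_mixed_integer_set hp hE.
have hL : affine_vec (fun xi => col_mx (E xi) (\col_(_ < 1) xi c)).
  exact: affine_vec_col_mx hE (affine_vec_col (fun=> c)).
apply: (mi_representable_ext (mi_representable_comp hp hL)) => xi.
by rewrite /= col_eta col_mxKu col_mxKd mxE.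
Qed.

Lemma select_mx (R : pzSemiRingType) n M (e : 'I_n -> 'I_M) (z : 'cV[R]_M) :
  \matrix_(i, j) (j == e i)%:R *m z = \col_i z (e i) 0.
Proof.
apply/matrixP => i c; rewrite (ord1 c) !mxE (bigD1 (e i)) //= mxE eqxx mul1r.
by rewrite big1 ?addr0 // => j /negbTE nj; rewrite mxE nj mul0r.
Qed.

Section Estimation.
Variables (R : realType) (nx nu nth npi mx my : nat).
Variables (X : 'cV[R]_nx -> Prop) (U : 'cV[R]_nu -> Prop) (Th : 'cV[R]_nth -> Prop).
Variables (Q : 'M[R]_(nx + nu)) (H : 'M[R]_(nth + npi, nx + nu)) (K : nat) (m : 'I_K -> nat)
  (F : forall i : 'I_K, 'I_(m i).+1 -> 'rV[R]_(nx + nu + nth + npi))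
  (zeta : forall i : 'I_K, 'I_(m i).+1 -> R).
Variables (A : 'M[R]_nx) (B : 'M[R]_(nx, nu)) (k : 'cV[R]_nx).
Variables (g : 'cV[R]_nx -> 'cV[R]_nu -> 'cV[R]_nth -> 'cV[R]_npi -> 'cV[R]_nth)
  (P : nat) (r : 'I_P -> nat)
  (Bg : forall i : 'I_P, 'M[R]_(r i, nx + nu + nth + npi))
  (psi : forall i : 'I_P, 'cV[R]_(r i))
  (G : forall i : 'I_P, 'M[R]_(nth, nx + nu + nth + npi))
  (chi : forall i : 'I_P, 'cV[R]_nth).
Variables (D : 'M[R]_(mx, nx)) (C : 'M[R]_(my, nu)) (pnu pom : R -> R).
Variables (N nxo nuo : nat) (tx : 'I_nxo.+1 -> nat) (xo : 'I_nxo.+1 -> 'cV[R]_mx)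
  (tau : 'I_nuo.+1 -> nat) (yo : 'I_nuo.+1 -> 'cV[R]_my) (pi : nat -> 'cV[R]_npi).
Variables (mX mU mTh : nat) (AX : 'M[R]_(mX, nx)) (bX : 'cV[R]_mX)
  (AU : 'M[R]_(mU, nu)) (bU : 'cV[R]_mU) (ATh : 'M[R]_(mTh, nth)) (bTh : 'cV[R]_mTh).
Hypothesis hX : forall x, X x <-> leV (AX *m x) bX.
Hypothesis hU : forall u, U u <-> leV (AU *m u) bU.
Hypothesis hTh : forall th, Th th <-> leV (ATh *m th) bTh.
Variables (MX MU MTh : R).
Hypothesis bdX : forall x, X x -> forall i, `|x i 0| <= MX.
Hypothesis bdU : forall u, U u -> forall i, `|u i 0| <= MU.
Hypothesis bdTh : forall th, Th th -> forall i, `|th i 0| <= MTh.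
Hypothesis PSDQ : PSD Q.
Hypothesis g_pieces : forall t, (t <= N)%N -> forall x u th, X x -> U u -> Th th ->
  exists i, leV (Bg i *m cat4 x u th (pi t)) (psi i).
Hypothesis g_affine_on : forall t, (t <= N)%N -> forall x u th i, X x -> U u -> Th th ->
  leV (Bg i *m cat4 x u th (pi t)) (psi i) ->
  g x u th (pi t) = G i *m cat4 x u th (pi t) + chi i.
Hypothesis hpnu : log_density_milp pnu mx.
Hypothesis hpom : log_density_milp pom my.

Local Notation f := (f_util Q H F zeta).
Local Notation h := (fun x u => A *m x + B *m u + k).

(* One variable per coordinate of the states, motivations and decisions on
   the horizon, and one hypograph variable per log-likelihood term. *)
Definition est_var : finType :=
  ((('I_N.+2 * 'I_nx + 'I_N.+2 * 'I_nth) + 'I_N.+1 * 'I_nu) + ('I_nxo.+1 + 'I_nuo.+1))%type.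

(* [inord t] is junk ([0]) beyond the horizon, where only [t <= N.+1] matters. *)
Definition vx t i : est_var := inl (inl (inl (inord t, i))).
Definition vth t i : est_var := inl (inl (inr (inord t, i))).
Definition vu t i : est_var := inl (inr (inord t, i)).
Definition vlx i : est_var := inr (inl i).
Definition vly j : est_var := inr (inr j).

Definition est_x (xi : est_var -> R) t := \col_i xi (vx t i).
Definition est_th (xi : est_var -> R) t := \col_i xi (vth t i).
Definition est_u (xi : est_var -> R) t := \col_i xi (vu t i).

Definition est_hypo (xi : est_var -> R) :=
  (forall i, 0 < pvec pnu (xo i - D *m est_x xi (tx i)) /\
             xi (vlx i) <= ln (pvec pnu (xo i - D *m est_x xi (tx i)))) /\
  (forall j, 0 < pvec pom (yo j - C *m est_u xi (tau j)) /\
             xi (vly j) <= ln (pvec pom (yo j - C *m est_u xi (tau j)))).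

Definition est_set xi :=
  traj_feasible X U Th f h g pi N (est_x xi) (est_u xi) (est_th xi) /\ est_hypo xi.

Definition agent_index t (v : ('I_nx + 'I_nth) + 'I_nu) :=
  match v with inl (inl i) => vx t i | inl (inr i) => vth t i | inr i => vu t i end.

Definition trans_index t (v : (('I_nx + 'I_nu) + 'I_nth) + 'I_nth) :=
  match v with
  | inl (inl (inl i)) => vx t i | inl (inl (inr i)) => vu t i
  | inl (inr i) => vth t i | inr i => vth t.+1 i
  end.

Definition est_stage (xi : est_var -> R) (t : nat) :=
  [/\ agent_argmax Q H F zeta A B k (pi t) X U Th (fun v => xi (agent_index t v)),
      trans_graph X U Th g (pi t) (fun v => xi (trans_index t v)) &
      est_x xi t.+1 = A *m est_x xi t + B *m est_u xi t + k].

Lemma est_trajP xi :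
  traj_feasible X U Th f h g pi N (est_x xi) (est_u xi) (est_th xi) <->
  (forall t : 'I_N.+1, est_stage xi t) /\
  (forall t : 'I_N.+2, X (est_x xi t) /\ Th (est_th xi t)).
Proof.
split=> [[hstep hstate]|[hstage hstate]].
  split=> [t|t]; last exact: hstate (ltn_ord t).
  have ht : (t <= N)%N by rewrite -ltnS.
  have [hu opt hx hth] := hstep t ht.
  have [[hXt hTt] [_ hTt']] := (hstate t (leqW ht), hstate t.+1 ht).
  by split=> //; split=> //=; rewrite -hth.
split=> [t ht|t ht]; last exact: hstate (Ordinal (ht : (t < N.+2)%N)).
have [[hXt hTt hu opt] [_ _ _ hg] hx] := hstage (Ordinal (ht : (t < N.+1)%N)).
by split.
Qed.

Lemma mi_representable_est_stage (t : 'I_N.+1) : mi_representable (fun xi => est_stage xi t).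
Proof.
have ht : (t <= N)%N by rewrite -ltnS.
have hx t' : affine_vec (fun xi : est_var -> R => est_x xi t') by apply: affine_vec_col.
have hu t' : affine_vec (fun xi : est_var -> R => est_u xi t') by apply: affine_vec_col.
have hv (v : est_var) : affine_fun (fun xi : est_var -> R => xi v) := affine_var v.
apply: mi_representableI3.
- apply: (mi_representable_comp (mi_representable_agent_argmax H F zeta A B k (pi t)
    hX hU hTh bdX bdU bdTh PSDQ)).
  by move=> v; apply: hv.
- apply: (mi_representable_comp (mi_representable_trans_graph hX hU hTh bdX bdU bdTh
    (g_pieces ht) (g_affine_on ht))).
  by move=> v; apply: hv.
have hL (ib : 'I_nx * bool) : affine_fun (fun xi =>
    eq_rows (est_x xi t.+1 ib.1 0) ((A *m est_x xi t + B *m est_u xi t + k) ib.1 0) ib.2).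
  apply: affine_eq_rows; first exact: hx.
  apply: (affine_vecD (affine_vecD (affine_vecM A (hx t)) (affine_vecM B (hu t)))).
  exact: affine_vec_cst.
apply: (mi_representable_ext (mi_representable_polyhedron hL)) => xi.
split=> [hr|-> [i b] /=]; last by move: b; apply/eq_rowsP.
by apply/matrixP => i j; rewrite (ord1 j); apply/eq_rowsP => b; apply: hr (i, b).
Qed.

Lemma mi_representable_est_set : mi_representable est_set.
Proof.
have hx t : affine_vec (fun xi : est_var -> R => est_x xi t) by apply: affine_vec_col.
have hu t : affine_vec (fun xi : est_var -> R => est_u xi t) by apply: affine_vec_col.
have hth t : affine_vec (fun xi : est_var -> R => est_th xi t) by apply: affine_vec_col.
apply: mi_representableI.
  apply: (mi_representable_ext (S := fun xi => (forall t : 'I_N.+1, est_stage xi t) /\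
    forall t : 'I_N.+2, X (est_x xi t) /\ Th (est_th xi t))); last first.
    by move=> xi; apply: iff_sym; apply: est_trajP.
  apply: mi_representableI; apply: mi_representable_forall => t.
    exact: mi_representable_est_stage.
  have hL (ab : 'I_mX + 'I_mTh) : affine_fun (fun xi => match ab with
      | inl a => (AX *m est_x xi t) a 0 - bX a 0
      | inr a => (ATh *m est_th xi t) a 0 - bTh a 0 end).
    by case: ab => a; apply: affineB _ (affine_cst _); apply: affine_vecM.
  apply: (mi_representable_ext (mi_representable_polyhedron hL)) => xi.
  rewrite hX hTh !leV_subr_le0.
  split=> [h|[h1 h2] [a|a]]; [split=> a | exact: h1 | exact: h2].
  - exact: h (inl a).
  - exact: h (inr a).
apply: mi_representableI; apply: mi_representable_forall => i;
  apply: mi_representable_log_hypo => //; apply: affine_vecB (affine_vec_cst _ _) _;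
  apply: affine_vecM; first [exact: hx | exact: hu].
Qed.

Definition traj_point (x : nat -> 'cV[R]_nx) (u : nat -> 'cV[R]_nu) (th : nat -> 'cV[R]_nth)
    (v : est_var) : R :=
  match v with
  | inl (inl (inl (t, i))) => x t i 0
  | inl (inl (inr (t, i))) => th t i 0
  | inl (inr (t, i)) => u t i 0
  | inr (inl i) => ln (pvec pnu (xo i - D *m x (tx i)))
  | inr (inr j) => ln (pvec pom (yo j - C *m u (tau j)))
  end.

Lemma traj_pointE x u th :
  [/\ forall t, (t <= N.+1)%N -> est_x (traj_point x u th) t = x t,
      forall t, (t <= N.+1)%N -> est_th (traj_point x u th) t = th t &
      forall t, (t <= N)%N -> est_u (traj_point x u th) t = u t].
Proof. by split=> t ht; apply/matrixP => i j; rewrite (ord1 j) mxE /= inordK. Qed.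

Hypothesis tx_le : forall i, (tx i <= N.+1)%N.
Hypothesis tau_le : forall j, (tau j <= N)%N.

Lemma est_set_traj_point x u th :
  traj_feasible X U Th f h g pi N x u th -> lik_pos pnu pom D C tx xo tau yo x u ->
  est_set (traj_point x u th).
Proof.
have [ex eth eu] := traj_pointE x u th.
move=> hF [hpx hpy]; split.
  by apply: traj_feasible_ext hF => t ht; [rewrite ex ?eth | rewrite eu].
by split=> [i|j]; rewrite /= ?ex ?eu //; split.
Qed.

Theorem est_milp_expressible : milp_expressible N
  (traj_feasible X U Th f h g pi N)
  (fun x u _ => lik_pos pnu pom D C tx xo tau yo x u)
  (fun x u _ => loglik pnu pom D C tx xo tau yo x u).
Proof.
have [M [Kc [Am [b [I [emb hemb]]]]]] := mi_representable_mx mi_representable_est_set.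
pose sel n (e : 'I_n -> est_var) : 'M[R]_(n, M) := \matrix_(i, j) (j == emb (e i))%:R.
pose c : 'cV[R]_M := \col_j (\sum_i (j == emb (vlx i))%:R + \sum_i (j == emb (vly i))%:R).
pose xi_of (z : 'cV[R]_M) v := z (emb v) 0.
have cE z : (c^T *m z) 0 0 = \sum_i xi_of z (vlx i) + \sum_j xi_of z (vly j).
  rewrite mxE (eq_bigr (fun j => \sum_i (j == emb (vlx i))%:R * z j 0 +
    \sum_i (j == emb (vly i))%:R * z j 0)) => [|j _]; last by rewrite !mxE mulrDl !mulr_suml.
  by rewrite big_split /=; congr (_ + _); rewrite exchange_big /=; apply: eq_bigr => i _;
    apply: vdot_delta.
have selE n (e : nat -> 'I_n -> est_var) z :
    (fun t => sel n (e t) *m z) = (fun t => \col_i xi_of z (e t i)).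
  by apply: funext => t; rewrite select_mx.
exists M, Kc, Am, b, c, I, (fun t => sel _ (vx t)), (fun t => sel _ (vu t)).
exists (fun t => sel _ (vth t)); split.
  move=> z hz iz /=; rewrite !selE.
  have [hF [hpx hpy]] : est_set (xi_of z) by apply/hemb; exists z.
  split=> //; first by split=> [i|j]; [case: (hpx i) | case: (hpy j)].
  rewrite cE /loglik; apply: lerD; apply: ler_sum => i _; [exact: (hpx i).2 | exact: (hpy i).2].
move=> x u th hF hP; have [ex eth eu] := traj_pointE x u th.
have [z [hz iz ez]] := (hemb _).1 (est_set_traj_point hF hP).
exists z; split=> // [t ht|t ht|].
- rewrite /sel !select_mx -ex // -eth //.
  by split; apply/matrixP => i j; rewrite (ord1 j) !mxE ez.
- by rewrite /sel select_mx -eu //; apply/matrixP => i j; rewrite (ord1 j) !mxE ez.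
- by rewrite cE (_ : xi_of z = traj_point x u th) //; apply: funext => v; apply: ez.
Qed.

End Estimation.
Theorem corollary1 (R : realType) (nx nu nth npi mx my : nat)
  (X : 'cV[R]_nx -> Prop) (U : 'cV[R]_nu -> Prop) (Th : 'cV[R]_nth -> Prop)
  (Pi : 'cV[R]_npi -> Prop)
  (* data of f (A2) *)
  (Q : 'M[R]_(nx + nu)) (H : 'M[R]_(nth + npi, nx + nu))
  (K : nat) (m : 'I_K -> nat)
  (F : forall i : 'I_K, 'I_(m i).+1 -> 'rV[R]_(nx + nu + nth + npi))
  (zeta : forall i : 'I_K, 'I_(m i).+1 -> R)
  (* data of h and g (A3) *)
  (A : 'M[R]_nx) (B : 'M[R]_(nx, nu)) (k : 'cV[R]_nx)
  (g : 'cV[R]_nx -> 'cV[R]_nu -> 'cV[R]_nth -> 'cV[R]_npi -> 'cV[R]_nth)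
  (P : nat) (r : 'I_P -> nat)
  (Bg : forall i : 'I_P, 'M[R]_(r i, nx + nu + nth + npi))
  (psi : forall i : 'I_P, 'cV[R]_(r i))
  (G : forall i : 'I_P, 'M[R]_(nth, nx + nu + nth + npi))
  (chi : forall i : 'I_P, 'cV[R]_nth)
  (* observation model (A4) *)
  (D : 'M[R]_(mx, nx)) (C : 'M[R]_(my, nu)) (pnu pom : R -> R)
  (* the estimation problem: horizon, measurement times, data, incentives *)
  (N nxo nuo : nat) (tx : 'I_nxo.+1 -> nat) (xo : 'I_nxo.+1 -> 'cV[R]_mx)
  (tau : 'I_nuo.+1 -> nat) (yo : 'I_nuo.+1 -> 'cV[R]_my)
  (pi : nat -> 'cV[R]_npi) :
  let f := f_util Q H F zeta in
  let h := fun (x : 'cV[R]_nx) (u : 'cV[R]_nu) => A *m x + B *m u + k in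
  let dom := fun x u th p => [/\ X x, U u, Th th & Pi p] in
  (* (A1) *)
  polyhedron X -> box_bounded X ->
  polyhedron U -> box_bounded U ->
  polyhedron Th -> box_bounded Th ->
  mixed_integer_set Pi -> box_bounded Pi ->
  (* (A2) *)
  PSD Q ->
  (forall u th p, U u -> Th th -> Pi p -> concave_on X (fun x => f x u th p)) ->
  (forall x th p, X x -> Th th -> Pi p ->
     strictly_concave_on U (fun u => f x u th p)) ->
  (forall x u p, X x -> U u -> Pi p -> concave_on Th (fun th => f x u th p)) ->
  (* (A3) *)
  (forall x', X x' -> exists x u, [/\ X x, U u & h x u = x']) ->
  (forall th', Th th' -> exists x u th p, dom x u th p /\ g x u th p = th') ->
  (forall x u th p, dom x u th p ->
     exists i, leV (Bg i *m cat4 x u th p) (psi i)) ->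
  (forall x u th p i, dom x u th p -> leV (Bg i *m cat4 x u th p) (psi i) ->
     g x u th p = G i *m cat4 x u th p + chi i) ->
  (forall i j, i != j -> forall z,
     ~ (in_interior (fun w => leV (Bg i *m w) (psi i)) z /\
        in_interior (fun w => leV (Bg j *m w) (psi j)) z)) ->
  (* (A4) *)
  noise_density pnu -> noise_density pom ->
  log_density_milp pnu mx -> log_density_milp pom my ->
  (* (A5) observability *)
  (exists (T : nat) (pio : nat -> 'cV[R]_npi),
     (forall t, Pi (pio t)) /\
     forall x u th x' u' th',
       traj_feasible X U Th f h g pio T x u th ->
       traj_feasible X U Th f h g pio T x' u' th' ->
       (forall t, (t <= T)%N -> D *m x t = D *m x' t /\ C *m u t = C *m u' t) ->
       x 0%N = x' 0%N /\ th 0%N = th' 0%N) ->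
  (* the given incentives and the measurement times lie in the horizon *)
  (forall t, (t <= N)%N -> Pi (pi t)) ->
  (forall i, (tx i <= N.+1)%N) -> (forall j, (tau j <= N)%N) ->
  milp_expressible N
    (traj_feasible X U Th f h g pi N)
    (fun x u _ => lik_pos pnu pom D C tx xo tau yo x u)
    (fun x u _ => loglik pnu pom D C tx xo tau yo x u).
Proof.
move=> f h dom [mX [AX [bX hX]]] [MX bdX] [mU [AU [bU hU]]] [MU bdU]
  [mTh [ATh [bTh hTh]]] [MTh bdTh] _ _ PSDQ _ _ _ _ _ g_cover g_local _ _ _
  hpnu hpom _ hpi tx_le tau_le.
apply: (est_milp_expressible H F zeta A B k D C xo yo hX hU hTh bdX bdU bdTh PSDQ _ _
  hpnu hpom tx_le tau_le).
- by move=> t ht x u th hx hu hth; apply: g_cover; split=> //; apply: hpi.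
- by move=> t ht x u th i hx hu hth; apply: g_local => //; split=> //; apply: hpi.
Qed.
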